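(* For every $n\in\mathbb N$ there exists $k(n)\in\mathbb N$ such that the following holds: whenever $D$ is a digraph with an end $\omega$ of in-degree at least $k(n)$ and $\mathcal R$ is a set of $k(n)$ pairwise disjoint rays in $\omega$, then $D$ contains a subdivision of the hexagonal grid of width $n$ or of the circular grid of width $n$ such that each of its rays $R_i$ (from the definition of these grids) corresponds, in the subdivision, to a ray from $\mathcal R$.
   Context: A ray is an orientation of a one-way infinite path with every edge oriented towards infinity; an anti-ray one with every edge oriented away from infinity; dipath = directed path. For rays or anti-rays $Q,R$ write $Q\le R$ if there are infinitely many pairwise disjoint $Q$--$R$ dipaths and $Q\sim R$ if $Q\le R$ and $R\le Q$; ends are the $\sim$-classes. The in-degree of an end is the maximum number (in $\mathbb N\cup\{\infty\}$) of pairwise disjoint rays in it. Let $R_1,\ldots,R_n$ be pairwise disjoint rays, $R_i=r^i_1r^i_2\ldots$. The hexagonal grid of width $n$ is $\bigcup_{i=1}^nR_i$ together with the edges $r^i_jr^{i+1}_j$ for all pairs $(i,j)$ with $i\equiv j\equiv1\pmod 2$ and $j\equiv1\pmod4$, or $i\equiv j\equiv0\pmod2$ and $j\equiv2\pmod4$, and the edges $r^{i+1}_jr^i_j$ for all pairs $(i,j)$ with $i\equiv j\equiv1\pmod2$ and $j\equiv3\pmod4$, or $i\equiv j\equiv0\pmod2$ and $j\equiv0\pmod4$ (where $1\le i<n$). The circular grid of width $n$ is $\bigcup_{i=1}^nR_i$ together with the edges $r^i_{j+1}r^{i+1}_j$ for all odd $j$ and all $i\in\{2,\ldots,n-1\}$,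 the edges $r^1_jr^2_j$ for all odd $j$, and the edges $r^n_jr^1_j$ for all even $j$. A subdivision of $H$ replaces each edge $uv$ by a new $u$--$v$ dipath, these internally disjoint with no inner vertices in $V(H)$. *)

From Stdlib Require Import Arith Lia List.
Import ListNotations.

Section Digraphs.
Variable V : Type.
Variable E : V -> V -> Prop.

Fixpoint chain (p : list V) : Prop :=
  match p with
  | x :: ((y :: _) as t) => E x y /\ chain t
  | _ => True
  end.

Definition is_dipath (p : list V) : Prop :=
  p <> [] /\ NoDup p /\ chain p.

Definition is_ray (r : nat -> V) : Prop :=
  (forall s t, r s = r t -> s = t) /\ (forall t, E (r t) (r (S t))).

Definition is_antiray (r : nat -> V) : Prop :=
  (forall s t, r s = r t -> s = t) /\ (forall t, E (r (S t)) (r t)).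

Definition raylike (r : nat -> V) : Prop := is_ray r \/ is_antiray r.

Definition range (r : nat -> V) : V -> Prop := fun x => exists t, r t = x.

Definition AB_dipath (A B : V -> Prop) (p : list V) : Prop :=
  is_dipath p /\
  forall i x, nth_error p i = Some x ->
    (A x <-> i = 0) /\ (B x <-> S i = length p).

Definition vdisjoint (p q : list V) : Prop :=
  forall x, In x p -> In x q -> False.

Definition ray_le (Q R : nat -> V) : Prop :=
  exists P : nat -> list V,
    (forall m, AB_dipath (range Q) (range R) (P m)) /\
    (forall m m', m <> m' -> vdisjoint (P m) (P m')).

Definition ray_equiv (Q R : nat -> V) : Prop := ray_le Q R /\ ray_le R Q.

Definition is_end (w : (nat -> V) -> Prop) : Prop :=
  exists r0, raylike r0 /\
    forall q, w q <-> (raylike q /\ ray_equiv q r0).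

Definition rays_disjoint (r s : nat -> V) : Prop :=
  forall a b, r a <> s b.

(* The in-degree of the end w (max number of disjoint rays in w,
   in N u {oo}) is at least k. *)
Definition end_indeg_ge (w : (nat -> V) -> Prop) (k : nat) : Prop :=
  exists f : nat -> nat -> V,
    (forall i, i < k -> is_ray (f i) /\ w (f i)) /\
    (forall i j, i < k -> j < k -> i <> j -> rays_disjoint (f i) (f j)).

Definition inner (p : list V) (x : V) : Prop :=
  exists i, 0 < i /\ S i < length p /\ nth_error p i = Some x.

Definition is_subdivision {W : Type} (HV : W -> Prop) (HE : W -> W -> Prop)
    (phi : W -> V) (P : W -> W -> list V) : Prop :=
  (forall u v, HV u -> HV v -> phi u = phi v -> u = v) /\
  (forall u v, HE u v ->
     is_dipath (P u v) /\
     nth_error (P u v) 0 = Some (phi u) /\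
     nth_error (P u v) (length (P u v) - 1) = Some (phi v)) /\
  (forall u v x, HE u v -> inner (P u v) x -> ~ (exists w, HV w /\ phi w = x)) /\
  (forall u v u' v' x, HE u v -> HE u' v' -> inner (P u v) x -> In x (P u' v') ->
     u = u' /\ v = v').

End Digraphs.

(* Grids: vertex r^i_j is encoded as the pair (i, j), 1 <= i <= n, 1 <= j. *)
Definition grid_vert (n : nat) (v : nat * nat) : Prop :=
  1 <= fst v <= n /\ 1 <= snd v.

Definition ray_edge (n : nat) (u v : nat * nat) : Prop :=
  exists i j, 1 <= i <= n /\ 1 <= j /\ u = (i, j) /\ v = (i, S j).

Definition hex_edge (n : nat) (u v : nat * nat) : Prop :=
  ray_edge n u v \/
  (exists i j, 1 <= i < n /\ 1 <= j /\ u = (i, j) /\ v = (S i, j) /\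
     ((Nat.odd i = true /\ j mod 4 = 1) \/ (Nat.even i = true /\ j mod 4 = 2))) \/
  (exists i j, 1 <= i < n /\ 1 <= j /\ u = (S i, j) /\ v = (i, j) /\
     ((Nat.odd i = true /\ j mod 4 = 3) \/ (Nat.even i = true /\ j mod 4 = 0))).

Definition circ_edge (n : nat) (u v : nat * nat) : Prop :=
  ray_edge n u v \/
  (exists i j, 2 <= i <= n - 1 /\ 1 <= j /\ Nat.odd j = true /\
     u = (i, S j) /\ v = (S i, j)) \/
  (exists j, 2 <= n /\ 1 <= j /\ Nat.odd j = true /\ u = (1, j) /\ v = (2, j)) \/
  (exists j, 1 <= n /\ 1 <= j /\ Nat.even j = true /\ u = (n, j) /\ v = (1, j)).

Definition rays_correspond {V : Type} (n k : nat) (Rs : nat -> nat -> V)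
    (phi : nat * nat -> V) (P : nat * nat -> nat * nat -> list V) : Prop :=
  forall i, 1 <= i <= n ->
    exists m (t : nat -> nat), m < k /\
      forall j, 1 <= j ->
        t j < t (S j) /\
        phi (i, j) = Rs m (t j) /\
        P (i, j) (i, S j) = map (Rs m) (seq (t j) (S (t (S j) - t j))).

Arguments chain {V}. Arguments is_dipath {V}. Arguments is_ray {V}.
Arguments is_antiray {V}. Arguments raylike {V}. Arguments range {V}.
Arguments AB_dipath {V}. Arguments vdisjoint {V}. Arguments ray_le {V}.
Arguments ray_equiv {V}. Arguments is_end {V}. Arguments rays_disjoint {V}.
Arguments end_indeg_ge {V}. Arguments inner {V}. Arguments is_subdivision {V} E {W}.

(* Call two of the given rays linked if, avoiding any finite vertex set, some dipath joins them
   and meets the given rays only in its ends.  As all rays lie in one end, the resulting link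
   graph on the rays is strongly connected.  A purely combinatorial argument (a long geodesic in
   the link graph or its converse, or else pigeonhole on the distances to and from one vertex)
   finds rays [q 1, ..., q n] such that consecutive ones are joined in both directions, or
   cyclically in one direction, by walks avoiding the other [q i]; concatenating links along
   such walks links the corresponding rays while avoiding the other chosen ones.  The grid is then
   built greedily: its non-ray edges are routed one at a time by links avoiding everything used so
   far, and the branch vertices are placed on the chosen rays in the order of these stages. *)

From Stdlib Require Import Arith Lia List Classical ClassicalEpsilon FinFun Bool.
Import ListNotations.

Section Lists.
Context {V : Type}.

Definition ends_at (l : list V) (y : V) : Prop := nth_error l (length l - 1) = Some y.

Definition avoids (l X : list V) : Prop := forall x, In x l -> ~ In x X.

Lemma ends_at_single x y : ends_at [x] y <-> x = y.
Proof. unfold ends_at; simpl; split; congruence. Qed.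

Lemma ends_at_In l y : ends_at l y -> In y l.
Proof. apply nth_error_In. Qed.

Lemma ends_at_unique l y y' : ends_at l y -> ends_at l y' -> y = y'.
Proof. unfold ends_at; congruence. Qed.

Lemma ends_at_cons x l y : l <> [] -> ends_at (x :: l) y <-> ends_at l y.
Proof.
  intros Hl. unfold ends_at. destruct l as [|z l]; [congruence|].
  simpl. rewrite ?Nat.sub_0_r. reflexivity.
Qed.

Lemma ends_at_app l1 l2 y : l2 <> [] -> ends_at (l1 ++ l2) y <-> ends_at l2 y.
Proof.
  intros Hl2. induction l1 as [|x l1 IH]; [reflexivity|].
  rewrite <- app_comm_cons, ends_at_cons; [exact IH|].
  destruct l1, l2; simpl; congruence.
Qed.

Lemma ends_at_snoc l y : ends_at (l ++ [y]) y.
Proof. apply ends_at_app; [congruence|]. apply ends_at_single. reflexivity. Qed.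

Lemma ends_at_join l1 z l2 y :
  l1 <> [] -> ends_at l1 z -> ends_at (z :: l2) y -> ends_at (l1 ++ l2) y.
Proof.
  intros Hne H1 H2. destruct l2 as [|w l2].
  - rewrite app_nil_r. rewrite ends_at_single in H2. congruence.
  - apply ends_at_app; [congruence|]. apply (ends_at_cons z); [congruence|exact H2].
Qed.

Lemma ends_at_map_seq (f : nat -> V) a m : ends_at (map f (seq a (S m))) (f (a + m)).
Proof.
  unfold ends_at. rewrite length_map, length_seq, nth_error_map, nth_error_seq.
  replace (S m - 1) with m by lia. destruct (Nat.ltb_spec m (S m)); [reflexivity|lia].
Qed.

Lemma nth_error_app_head (l1 l2 : list V) x :
  nth_error l1 0 = Some x -> nth_error (l1 ++ l2) 0 = Some x.
Proof. destruct l1; simpl; congruence. Qed.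

Lemma In_first_last_or_inner (l : list V) z :
  In z l -> nth_error l 0 = Some z \/ ends_at l z \/ inner l z.
Proof.
  intros H. destruct (In_nth_error _ _ H) as [i Hi].
  assert (i < length l) by (apply nth_error_Some; congruence).
  destruct i as [|i]; [auto|].
  destruct (Nat.eq_dec (S i) (length l - 1)) as [He|He].
  - right; left. unfold ends_at. rewrite <- He. exact Hi.
  - right; right. exists (S i). repeat split; [lia|lia|exact Hi].
Qed.

Lemma inner_In (l : list V) z : inner l z -> In z l.
Proof. intros [i [_ [_ H]]]. eapply nth_error_In; eauto. Qed.

Lemma inner_not_ends (l : list V) z x y :
  NoDup l -> nth_error l 0 = Some x -> ends_at l y -> inner l z -> z <> x /\ z <> y.
Proof.
  intros Hnd H0 Hl [i [Hi1 [Hi2 Hi]]]. rewrite NoDup_nth_error in Hnd. unfold ends_at in Hl.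
  split; intros ->.
  - assert (i = 0) by (apply Hnd; [lia|congruence]). lia.
  - assert (i = length l - 1) by (apply Hnd; [lia|congruence]). lia.
Qed.

Lemma In_split_first (P : V -> Prop) l y : In y l -> P y ->
  exists l1 z l2, l = l1 ++ z :: l2 /\ P z /\ forall w, In w l1 -> ~ P w.
Proof.
  induction l as [|x l IH]; intros Hy Py; [destruct Hy|].
  destruct (classic (P x)) as [Px|Npx].
  - exists [], x, l. auto.
  - destruct Hy as [->|Hy]; [contradiction|].
    destruct (IH Hy Py) as [l1 [z [l2 [-> [Pz Hl1]]]]].
    exists (x :: l1), z, l2. split; [reflexivity|]. split; [exact Pz|].
    intros w [<-|Hw]; auto.
Qed.

Lemma avoids_app (l X Y : list V) : avoids l (X ++ Y) <-> avoids l X /\ avoids l Y.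
Proof.
  unfold avoids. setoid_rewrite in_app_iff. firstorder.
Qed.

Lemma injective_bound (f : nat -> V) (X : list V) : (forall s t, f s = f t -> s = t) ->
  exists N, forall t, In (f t) X -> t < N.
Proof.
  intros Hinj. induction X as [|x X [N HN]].
  - exists 0. simpl. tauto.
  - destruct (classic (exists t0, f t0 = x)) as [[t0 Ht0]|Hno].
    + exists (Nat.max N (S t0)). intros t [Ht|Ht].
      * subst x. apply Hinj in Ht. lia.
      * specialize (HN t Ht). lia.
    + exists N. intros t [Ht|Ht]; [exfalso; eauto|auto].
Qed.

Lemma not_In_prefix_ge (f : nat -> V) N t : ~ In (f t) (map f (seq 0 N)) -> N <= t.
Proof.
  intros H. destruct (Nat.lt_ge_cases t N) as [Hlt|]; [|assumption].
  exfalso. apply H, in_map, in_seq. lia.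
Qed.

Lemma disjoint_family_avoids (P : nat -> list V) :
  (forall m m', m <> m' -> vdisjoint (P m) (P m')) -> forall X, exists m, avoids (P m) X.
Proof.
  intros HP X. enough (H : forall N, exists m, N <= m /\ avoids (P m) X).
  { destruct (H 0) as [m [_ Hm]]. eauto. }
  induction X as [|x X IH]; intros N.
  - exists N. split; [lia|]. intros z _ [].
  - destruct (IH N) as [m1 [Hm1 Hav1]].
    destruct (classic (In x (P m1))) as [Hx|Hx].
    + destruct (IH (S m1)) as [m2 [Hm2 Hav2]]. exists m2. split; [lia|].
      intros z Hz [<-|Hz2].
      * exact (HP m1 m2 ltac:(lia) x Hx Hz).
      * exact (Hav2 z Hz Hz2).
    + exists m1. split; [exact Hm1|]. intros z Hz [<-|Hz2]; [contradiction|].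
      exact (Hav1 z Hz Hz2).
Qed.

Lemma finite_choice_incl {A : Type} (P : nat -> list A -> Prop) :
  (forall i X Y, incl X Y -> P i X -> P i Y) ->
  forall m, (forall i, i < m -> exists X, P i X) -> exists X, forall i, i < m -> P i X.
Proof.
  intros Hmono m. induction m as [|m IH]; intros H.
  - exists []. intros; lia.
  - destruct IH as [X HX]; [intros i Hi; apply H; lia|].
    destruct (H m ltac:(lia)) as [Y HY]. exists (X ++ Y). intros i Hi.
    destruct (Nat.eq_dec i m) as [->|Him].
    + apply (Hmono m Y); [apply incl_appr, incl_refl|exact HY].
    + apply (Hmono i X); [apply incl_appl, incl_refl|apply HX; lia].
Qed.

End Lists.

Section Walks.
Context {V : Type} {E : V -> V -> Prop}.

Lemma chain_app_l l1 l2 : chain E (l1 ++ l2) -> chain E l1.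
Proof.
  induction l1 as [|x l1 IH]; simpl; [auto|].
  destruct l1 as [|y l1]; simpl; [auto|]. intros [H1 H2]. split; [exact H1|exact (IH H2)].
Qed.

Lemma chain_app_r l1 l2 : chain E (l1 ++ l2) -> chain E l2.
Proof.
  induction l1 as [|x l1 IH]; simpl; [auto|].
  intros H. apply IH. destruct (l1 ++ l2); [exact I|exact (proj2 H)].
Qed.

Lemma chain_join l1 y l2 :
  chain E l1 -> ends_at l1 y -> chain E (y :: l2) -> chain E (l1 ++ l2).
Proof.
  induction l1 as [|x l1 IH]; intros H1 Hy H2; [discriminate|].
  destruct l1 as [|z l1].
  - rewrite ends_at_single in Hy. subst. exact H2.
  - destruct H1 as [Hxz H1]. split; [exact Hxz|].
    apply IH; [exact H1| |exact H2]. apply (ends_at_cons x); [congruence|exact Hy].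
Qed.

Lemma chain_map_seq (f : nat -> V) a m :
  (forall t, a <= t < a + m -> E (f t) (f (S t))) -> chain E (map f (seq a (S m))).
Proof.
  revert a. induction m as [|m IH]; intros a Hf; simpl; [exact I|].
  split; [apply Hf; lia|]. apply (IH (S a)). intros t Ht; apply Hf; lia.
Qed.

Lemma chain_map_seq_rev (f : nat -> V) a m :
  (forall t, a <= t < a + m -> E (f (S t)) (f t)) ->
  chain E (map (fun i => f (a + m - i)) (seq 0 (S m))).
Proof.
  intros Hf. apply chain_map_seq. intros t Ht.
  replace (a + m - t) with (S (a + m - S t)) by lia. apply Hf. lia.
Qed.

Lemma dipath_of_walk l x y : chain E l -> nth_error l 0 = Some x -> ends_at l y ->
  exists p, is_dipath E p /\ nth_error p 0 = Some x /\ ends_at p y /\ incl p l.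
Proof.
  remember (length l) as m eqn:Hm. revert l x Hm.
  induction m as [m IH] using (well_founded_induction lt_wf).
  intros [|x' t] x Hm Hc H0 Hy; [discriminate|]. injection H0 as <-.
  destruct (classic (In x' t)) as [Hin|Hnin].
  - destruct (in_split _ _ Hin) as [l1 [l2 ->]].
    destruct (IH (length (x' :: l2)) ltac:(subst; simpl; rewrite length_app; simpl; lia)
                (x' :: l2) x' eq_refl) as [p [Hp [Hp0 [Hpy Hincl]]]]; [| reflexivity | |].
    + apply (chain_app_r (x' :: l1)). exact Hc.
    + apply (ends_at_app (x' :: l1)); [congruence|exact Hy].
    + exists p. split; [exact Hp|]. split; [exact Hp0|]. split; [exact Hpy|].
      intros z Hz. apply Hincl in Hz. destruct Hz as [<-|Hz]; [left; reflexivity|].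
      right. apply in_or_app. right. right. exact Hz.
  - destruct t as [|z t].
    + rewrite ends_at_single in Hy. subst y. exists [x'].
      split; [split; [congruence|split; [|exact I]]|split; [reflexivity|split; [reflexivity|]]].
      * constructor; [intros []|constructor].
      * apply incl_refl.
    + destruct Hc as [Hxz Hc].
      destruct (IH (length (z :: t)) ltac:(subst; simpl; lia) (z :: t) z eq_refl Hc eq_refl)
        as [p [[Hpne [Hpnd Hpc]] [Hp0 [Hpy Hincl]]]].
      { apply (ends_at_cons x'); [congruence|exact Hy]. }
      destruct p as [|z' p]; [congruence|]. injection Hp0 as ->.
      exists (x' :: z :: p). repeat split.
      * congruence.
      * constructor; [|exact Hpnd]. intros Hx. apply Hnin, Hincl, Hx.
      * exact Hxz.
      * exact Hpc.
      * apply ends_at_cons; [congruence|exact Hpy].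
      * intros w [<-|Hw]; [left; reflexivity|right; apply Hincl, Hw].
Qed.

Lemma chain_cat3 p1 q p2 x y z w :
  chain E p1 -> nth_error p1 0 = Some x -> ends_at p1 y ->
  chain E q -> nth_error q 0 = Some y -> ends_at q z ->
  chain E p2 -> nth_error p2 0 = Some z -> ends_at p2 w ->
  chain E (p1 ++ tl q ++ tl p2) /\ nth_error (p1 ++ tl q ++ tl p2) 0 = Some x /\
  ends_at (p1 ++ tl q ++ tl p2) w /\
  (forall v, In v (p1 ++ tl q ++ tl p2) -> In v p1 \/ In v q \/ In v p2).
Proof.
  intros Hc1 H10 H1l Hcq Hq0 Hql Hc2 H20 H2l.
  destruct q as [|y' q']; [discriminate|]. injection Hq0 as ->.
  destruct p2 as [|z' p2']; [discriminate|]. injection H20 as ->.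
  assert (Hp1ne : p1 <> []) by (destruct p1; discriminate).
  simpl. split; [|split; [|split]].
  - apply chain_join with y; [exact Hc1|exact H1l|].
    apply (chain_join (y :: q') z); assumption.
  - apply nth_error_app_head. exact H10.
  - apply ends_at_join with y; [exact Hp1ne|exact H1l|].
    apply (ends_at_join (y :: q') z); [congruence|assumption|assumption].
  - intros v Hv. rewrite !in_app_iff in Hv. simpl. tauto.
Qed.

End Walks.

(** * Linked rays *)

Section Linkage.
Context {V : Type} (E : V -> V -> Prop).
Variable k : nat.
Variable Rs : nat -> nat -> V.
Hypothesis Hray : forall m, m < k -> is_ray E (Rs m).
Hypothesis Hdisj : forall m m', m < k -> m' < k -> m <> m' -> rays_disjoint (Rs m) (Rs m').

Definition is_link (SS : nat -> Prop) a b X (l : list V) s s' : Prop :=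
  is_dipath E l /\ nth_error l 0 = Some (Rs a s) /\ ends_at l (Rs b s') /\ avoids l X /\
  (forall x, inner l x -> forall c, SS c -> ~ range (Rs c) x).

Definition linked (SS : nat -> Prop) a b : Prop :=
  forall X, exists l s s', is_link SS a b X l s s'.

Lemma is_link_incl SS a b X Y l s s' :
  incl X Y -> is_link SS a b Y l s s' -> is_link SS a b X l s s'.
Proof.
  intros HXY [H1 [H2 [H3 [H4 H5]]]]. repeat (split; [assumption|]). split; [|exact H5].
  intros x Hx HX. exact (H4 x Hx (HXY x HX)).
Qed.

Lemma range_ray_unique c c' z : c < k -> c' < k -> range (Rs c) z -> range (Rs c') z -> c = c'.
Proof.
  intros Hc Hc' [t Ht] [t' Ht']. destruct (Nat.eq_dec c c') as [|Hne]; [assumption|].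
  exfalso. apply (Hdisj c c' Hc Hc' Hne t t'). congruence.
Qed.

Lemma link_of_walk SS a b X w s s' :
  chain E w -> nth_error w 0 = Some (Rs a s) -> ends_at w (Rs b s') -> avoids w X ->
  (forall z c, In z w -> SS c -> range (Rs c) z -> z = Rs a s \/ z = Rs b s') ->
  exists l, is_link SS a b X l s s'.
Proof.
  intros Hc H0 Hl Hav Hon.
  destruct (dipath_of_walk w _ _ Hc H0 Hl) as [p [Hp [Hp0 [Hpl Hincl]]]].
  exists p. split; [exact Hp|]. split; [exact Hp0|]. split; [exact Hpl|]. split.
  - intros z Hz. apply Hav, Hincl, Hz.
  - intros z Hz c Sc Hon'.
    destruct (inner_not_ends p z _ _ (proj1 (proj2 Hp)) Hp0 Hpl Hz) as [N1 N2].
    destruct (Hon z c (Hincl z (inner_In p z Hz)) Sc Hon'); contradiction.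
Qed.

Lemma link_meets_rays_at_ends SS a b X l s s' : is_link SS a b X l s s' ->
  forall z c, In z l -> SS c -> range (Rs c) z -> z = Rs a s \/ z = Rs b s'.
Proof.
  intros [_ [H0 [Hl [_ Hin]]]] z c Hz Sc Hon.
  destruct (In_first_last_or_inner l z Hz) as [Hz0|[Hzl|Hzi]].
  - left. congruence.
  - right. exact (ends_at_unique _ _ _ Hzl Hl).
  - exfalso. exact (Hin z Hzi c Sc Hon).
Qed.

Lemma linked_subset (SS SS' : nat -> Prop) a b :
  (forall c, SS' c -> SS c) -> linked SS a b -> linked SS' a b.
Proof.
  intros HS H X. destruct (H X) as [l [s [s' [H1 [H2 [H3 [H4 H5]]]]]]].
  exists l, s, s'. split; [exact H1|]. split; [exact H2|]. split; [exact H3|]. split; [exact H4|].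
  intros x Hx c Sc. apply H5, HS, Sc. exact Hx.
Qed.

(* Concatenate the two links through a segment of the ray [Rs b] lying beyond
   everything the first link and [X] use on it. *)
Lemma linked_trans SS a b c :
  (forall c, SS c -> c < k) -> b < k -> ~ SS b -> linked SS a b -> linked SS b c -> linked SS a c.
Proof.
  intros HS Hb HnSb H1 H2 X. destruct (Hray b Hb) as [Hbinj Hbe].
  destruct (injective_bound (Rs b) X Hbinj) as [N HN].
  destruct (H1 (X ++ map (Rs b) (seq 0 N))) as [p1 [s [s1 Hp1]]].
  pose proof Hp1 as [[_ [_ Hp1c]] [Hp10 [Hp1l [Hp1av _]]]].
  apply avoids_app in Hp1av as [Hp1X Hp1N].
  pose proof (not_In_prefix_ge (Rs b) N s1 (Hp1N _ (ends_at_In _ _ Hp1l))) as Hs1.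
  destruct (H2 (X ++ map (Rs b) (seq 0 (S s1)))) as [p2 [s2 [s' Hp2]]].
  pose proof Hp2 as [[_ [_ Hp2c]] [Hp20 [Hp2l [Hp2av _]]]].
  apply avoids_app in Hp2av as [Hp2X Hp2N].
  pose proof (not_In_prefix_ge (Rs b) (S s1) s2 (Hp2N _ (nth_error_In _ _ Hp20))) as Hs2.
  set (q := map (Rs b) (seq s1 (S (s2 - s1)))).
  assert (Hqc : chain E q) by (apply chain_map_seq; intros; apply Hbe).
  assert (Hql : ends_at q (Rs b s2)).
  { unfold q. replace s2 with (s1 + (s2 - s1)) at 2 by lia. apply ends_at_map_seq. }
  assert (Hqb : forall z, In z q -> range (Rs b) z /\ ~ In z X).
  { intros z Hz. unfold q in Hz. apply in_map_iff in Hz as [t [<- Ht]]. apply in_seq in Ht.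
    split; [exists t; reflexivity|]. intros HX. specialize (HN t HX). lia. }
  destruct (chain_cat3 p1 q p2 _ _ _ _ Hp1c Hp10 Hp1l Hqc eq_refl Hql Hp2c Hp20 Hp2l)
    as [Hc [H0 [Hl Hin]]].
  enough (Hends : forall z c0, In z (p1 ++ tl q ++ tl p2) -> SS c0 -> range (Rs c0) z ->
                   z = Rs a s \/ z = Rs c s').
  { destruct (link_of_walk SS a c X _ s s' Hc H0 Hl) as [l Hlink]; [|exact Hends|eauto].
    intros z Hz. destruct (Hin z Hz) as [Hz1|[Hzq|Hz2]];
      [exact (Hp1X z Hz1)|apply Hqb, Hzq|exact (Hp2X z Hz2)]. }
  intros z c0 Hz Sc0 Hon.
  assert (Hnotb : ~ range (Rs b) z).
  { intros Hzb. apply HnSb. rewrite (range_ray_unique b c0 z Hb (HS c0 Sc0) Hzb Hon). exact Sc0. }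
  destruct (Hin z Hz) as [Hz1|[Hzq|Hz2]].
  - destruct (link_meets_rays_at_ends _ _ _ _ _ _ _ Hp1 z c0 Hz1 Sc0 Hon) as [ -> | -> ];
      [left; reflexivity|exfalso; apply Hnotb; exists s1; reflexivity].
  - exfalso. exact (Hnotb (proj1 (Hqb z Hzq))).
  - destruct (link_meets_rays_at_ends _ _ _ _ _ _ _ Hp2 z c0 Hz2 Sc0 Hon) as [ -> | -> ];
      [exfalso; apply Hnotb; exists s2; reflexivity|right; reflexivity].
Qed.

End Linkage.

Lemma last_index (P : nat -> Prop) q : P 0 ->
  exists p, p <= q /\ P p /\ forall t, p < t <= q -> ~ P t.
Proof.
  intros H0. induction q as [|q [p [Hp [Pp Hmax]]]].
  - exists 0. split; [lia|]. split; [exact H0|]. intros; lia.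
  - destruct (classic (P (S q))) as [Pq|Npq].
    + exists (S q). split; [lia|]. split; [exact Pq|]. intros; lia.
    + exists p. split; [lia|]. split; [exact Pp|].
      intros t Ht. destruct (Nat.eq_dec t (S q)) as [->|]; [exact Npq|]. apply Hmax. lia.
Qed.

Lemma first_index (P : nat -> Prop) e : P e ->
  exists q, q <= e /\ P q /\ forall t, t < q -> ~ P t.
Proof.
  induction e as [e IH] using (well_founded_induction lt_wf). intros He.
  destruct (classic (exists t, t < e /\ P t)) as [[t [Ht Pt]]|Hno].
  - destruct (IH t Ht Pt) as [q [Hq [Pq Hmin]]]. exists q. split; [lia|]. auto.
  - exists e. split; [lia|]. split; [exact He|]. intros t Ht Pt. apply Hno. eauto.
Qed.

Section DigraphWalks.
Variable G : nat -> nat -> Prop.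

Definition is_walk a b d (f : nat -> nat) : Prop :=
  f 0 = a /\ f d = b /\ forall i, i < d -> G (f i) (f (S i)).

Definition walk (T : nat -> Prop) a b d : Prop :=
  exists f, is_walk a b d f /\ forall i, 0 < i < d -> T (f i).

Definition reach (T : nat -> Prop) a b : Prop := exists d, 0 < d /\ walk T a b d.

Lemma walk_nil T a : walk T a a 0.
Proof. exists (fun _ => a). repeat split; intros; lia. Qed.

Lemma walk_arc T a b : G a b -> walk T a b 1.
Proof.
  intros H. exists (fun i => if i =? 0 then a else b). repeat split.
  - intros i Hi. replace i with 0 by lia. exact H.
  - intros i Hi. lia.
Qed.

Lemma walk_cat T a b c d1 d2 :
  walk T a b d1 -> walk T b c d2 -> (0 < d1 -> 0 < d2 -> T b) -> walk T a c (d1 + d2).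
Proof.
  intros [f [[F0 [Fd Fe]] FT]] [g [[G0 [Gd Ge]] GT]] Hb.
  exists (fun i => if i <=? d1 then f i else g (i - d1)). split; [split; [|split]|].
  - exact F0.
  - destruct (Nat.leb_spec (d1 + d2) d1).
    + replace d2 with 0 in * by lia. rewrite Nat.add_0_r. congruence.
    + replace (d1 + d2 - d1) with d2 by lia. exact Gd.
  - intros i Hi. destruct (Nat.leb_spec i d1), (Nat.leb_spec (S i) d1).
    + apply Fe. lia.
    + replace i with d1 by lia. replace (S d1 - d1) with 1 by lia.
      rewrite Fd, <- G0. apply Ge. lia.
    + lia.
    + replace (S i - d1) with (S (i - d1)) by lia. apply Ge. lia.
  - intros i Hi. destruct (Nat.leb_spec i d1).
    + destruct (Nat.eq_dec i d1) as [->|]; [rewrite Fd; apply Hb; lia|apply FT; lia].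
    + apply GT. lia.
Qed.

Lemma walk_mono (T T' : nat -> Prop) a b d :
  (forall z, T z -> T' z) -> walk T a b d -> walk T' a b d.
Proof. intros HT [f [Hf HfT]]. exists f. split; [exact Hf|]. intros i Hi. apply HT, HfT, Hi. Qed.

Lemma walk_sub T a b d f p q : is_walk a b d f -> p <= q <= d ->
  (forall i, p < i < q -> T (f i)) -> walk T (f p) (f q) (q - p).
Proof.
  intros [_ [_ Fe]] Hpq HT. exists (fun t => f (p + t)). split; [split; [|split]|].
  - f_equal; lia.
  - f_equal; lia.
  - intros i Hi. replace (p + S i) with (S (p + i)) by lia. apply Fe. lia.
  - intros i Hi. apply HT. lia.
Qed.

Lemma reach_arc T a b : G a b -> reach T a b.
Proof. intros H. exists 1. split; [lia|]. apply walk_arc, H. Qed.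

Lemma reach_trans T a b c : reach T a b -> reach T b c -> T b -> reach T a c.
Proof.
  intros [d1 [H1 W1]] [d2 [H2 W2]] Hb. exists (d1 + d2). split; [lia|].
  apply walk_cat with b; auto.
Qed.

Lemma reach_mono (T T' : nat -> Prop) a b :
  (forall z, T z -> T' z) -> reach T a b -> reach T' a b.
Proof. intros HT [d [Hd HW]]. exists d. split; [exact Hd|]. eapply walk_mono; eauto. Qed.

(* Cut the walk at the last visit of [a]. *)
Lemma reach_of_walk T T' a b d : walk T a b d -> 0 < d -> a <> b ->
  (forall z, T z -> z <> a -> T' z) -> reach T' a b.
Proof.
  intros [f [[F0 [Fd Fe]] FT]] Hd Hab HT.
  destruct (last_index (fun t => f t = a) (d - 1)) as [p [Hp [Pp Hmax]]]; [exact F0|].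
  exists (d - p). split; [lia|].
  rewrite <- Pp, <- Fd. apply (walk_sub T' a b d f p d); [split; auto|lia|].
  intros i Hi. apply HT; [apply FT; lia|]. apply Hmax. lia.
Qed.

End DigraphWalks.

Definition converse (G : nat -> nat -> Prop) a b : Prop := G b a.

Lemma walk_converse G T a b d : walk (converse G) T a b d -> walk G T b a d.
Proof.
  intros [f [[F0 [Fd Fe]] FT]]. exists (fun t => f (d - t)). split; [split; [|split]|].
  - rewrite Nat.sub_0_r. exact Fd.
  - rewrite Nat.sub_diag. exact F0.
  - intros i Hi. specialize (Fe (d - S i) ltac:(lia)). unfold converse in Fe.
    replace (S (d - S i)) with (d - i) in Fe by lia. exact Fe.
  - intros i Hi. apply FT. lia.
Qed.

Lemma reach_converse G T a b : reach (converse G) T a b -> reach G T b a.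
Proof. intros [d [Hd HW]]. exists d. split; [exact Hd|]. apply walk_converse, HW. Qed.

(** * Rays of one end are joined by walks *)

Section ThroughAnEnd.
Context {V : Type} (E : V -> V -> Prop).

Definition walk_between (Q R : nat -> V) (X : list V) : Prop :=
  exists L x y, chain E L /\ nth_error L 0 = Some x /\ range Q x /\
    ends_at L y /\ range R y /\ avoids L X.

Lemma ray_le_avoiding (Q R : nat -> V) X : ray_le E Q R -> walk_between Q R X.
Proof.
  intros [P [HP HPd]]. destruct (disjoint_family_avoids P HPd X) as [m Hm].
  destruct (HP m) as [[Hne [_ Hc]] HAB].
  destruct (nth_error (P m) 0) as [x|] eqn:Hx; [|destruct (P m); [congruence|discriminate]].
  destruct (nth_error (P m) (length (P m) - 1)) as [y|] eqn:Hy.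
  2: { apply nth_error_None in Hy. destruct (P m); [congruence|simpl in Hy; lia]. }
  exists (P m), x, y. split; [exact Hc|]. split; [exact Hx|]. split; [apply (HAB 0 x Hx); reflexivity|].
  split; [exact Hy|]. split; [|exact Hm]. apply (HAB _ y Hy). destruct (P m); [congruence|simpl; lia].
Qed.

Lemma chain_cat3_avoids p1 q p2 x y z w X :
  chain E p1 -> nth_error p1 0 = Some x -> ends_at p1 y -> avoids p1 X ->
  chain E q -> nth_error q 0 = Some y -> ends_at q z -> avoids q X ->
  chain E p2 -> nth_error p2 0 = Some z -> ends_at p2 w -> avoids p2 X ->
  exists L, chain E L /\ nth_error L 0 = Some x /\ ends_at L w /\ avoids L X.
Proof.
  intros Hc1 H10 H1l Hav1 Hcq Hq0 Hql Havq Hc2 H20 H2l Hav2.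
  destruct (chain_cat3 p1 q p2 x y z w Hc1 H10 H1l Hcq Hq0 Hql Hc2 H20 H2l) as [Hc [H0 [Hl Hin]]].
  exists (p1 ++ tl q ++ tl p2). repeat (split; [assumption|]).
  intros v Hv. destruct (Hin v Hv) as [H|[H|H]]; [apply Hav1|apply Havq|apply Hav2]; exact H.
Qed.

(* Go from [Q] to the ray [r0], along [r0] beyond [X], and from [r0] to [R]: the second path is
   chosen after the first so that it starts further out on [r0]. *)
Lemma walk_via_ray (r0 Q R : nat -> V) X : is_ray E r0 -> ray_le E Q r0 -> ray_le E r0 R ->
  walk_between Q R X.
Proof.
  intros [Hinj Hfw] HQ HR. destruct (injective_bound r0 X Hinj) as [N HN].
  destruct (ray_le_avoiding Q r0 (X ++ map r0 (seq 0 N)) HQ)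
    as [p1 [x [y1 [Hc1 [H10 [Hx [H1l [[e <-] Hav1]]]]]]]].
  apply avoids_app in Hav1 as [Hav1 HN1].
  pose proof (not_In_prefix_ge r0 N e (HN1 _ (ends_at_In _ _ H1l))) as He.
  destruct (ray_le_avoiding r0 R (X ++ map r0 (seq 0 (S e))) HR)
    as [p2 [x2 [y [Hc2 [H20 [[s <-] [H2l [Hy Hav2]]]]]]]].
  apply avoids_app in Hav2 as [Hav2 HN2].
  pose proof (not_In_prefix_ge r0 (S e) s (HN2 _ (nth_error_In _ _ H20))) as Hs.
  destruct (chain_cat3_avoids p1 (map r0 (seq e (S (s - e)))) p2 x (r0 e) (r0 s) y X)
    as [L [HL [HL0 [HLy HLX]]]]; try assumption.
  - apply chain_map_seq. intros; apply Hfw.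
  - reflexivity.
  - replace s with (e + (s - e)) at 2 by lia. apply ends_at_map_seq.
  - intros z Hz HzX. apply in_map_iff in Hz as [t [<- Ht]]. apply in_seq in Ht.
    specialize (HN t HzX). lia.
  - exists L, x, y. repeat (split; [assumption|]). exact HLX.
Qed.

(* Symmetric to [walk_via_ray]: along an anti-ray one travels towards its start, so the path
   into [R] is chosen first. *)
Lemma walk_via_antiray (r0 Q R : nat -> V) X : is_antiray E r0 -> ray_le E Q r0 -> ray_le E r0 R ->
  walk_between Q R X.
Proof.
  intros [Hinj Hbw] HQ HR. destruct (injective_bound r0 X Hinj) as [N HN].
  destruct (ray_le_avoiding r0 R (X ++ map r0 (seq 0 N)) HR)
    as [p2 [x2 [y [Hc2 [H20 [[s <-] [H2l [Hy Hav2]]]]]]]].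
  apply avoids_app in Hav2 as [Hav2 HN2].
  pose proof (not_In_prefix_ge r0 N s (HN2 _ (nth_error_In _ _ H20))) as Hs.
  destruct (ray_le_avoiding Q r0 (X ++ map r0 (seq 0 (S s))) HQ)
    as [p1 [x [y1 [Hc1 [H10 [Hx [H1l [[e <-] Hav1]]]]]]]].
  apply avoids_app in Hav1 as [Hav1 HN1].
  pose proof (not_In_prefix_ge r0 (S s) e (HN1 _ (ends_at_In _ _ H1l))) as He.
  set (f := fun i => r0 (s + (e - s) - i)).
  destruct (chain_cat3_avoids p1 (map f (seq 0 (S (e - s)))) p2 x (r0 e) (r0 s) y X)
    as [L [HL [HL0 [HLy HLX]]]]; try assumption.
  - apply chain_map_seq_rev. intros; apply Hbw.
  - unfold f. simpl. do 2 f_equal. lia.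
  - replace (r0 s) with (f (0 + (e - s))) by (unfold f; f_equal; lia). apply ends_at_map_seq.
  - intros z Hz HzX. apply in_map_iff in Hz as [t [<- Ht]]. apply in_seq in Ht.
    specialize (HN _ HzX). lia.
  - exists L, x, y. repeat (split; [assumption|]). exact HLX.
Qed.

Lemma walk_via_raylike (r0 Q R : nat -> V) X : raylike E r0 -> ray_le E Q r0 -> ray_le E r0 R ->
  walk_between Q R X.
Proof. intros [Hr|Hr]; [apply walk_via_ray|apply walk_via_antiray]; exact Hr. Qed.

End ThroughAnEnd.

(** * The link graph is strongly connected *)

Section LinkGraph.
Context {V : Type} (E : V -> V -> Prop).
Variable k : nat.
Variable Rs : nat -> nat -> V.
Hypothesis Hray : forall m, m < k -> is_ray E (Rs m).
Hypothesis Hdisj : forall m m', m < k -> m' < k -> m <> m' -> rays_disjoint (Rs m) (Rs m').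

Definition link_graph a b : Prop := a < k /\ b < k /\ linked E Rs (fun c => c < k) a b.

Lemma linked_of_walk SS a b d : (forall c, SS c -> c < k) -> 0 < d ->
  walk link_graph (fun c => ~ SS c) a b d -> linked E Rs SS a b.
Proof.
  intros HS. revert a. induction d as [|d IH]; intros a Hd [f [[F0 [Fd Fe]] FT]]; [lia|].
  destruct (Fe 0 ltac:(lia)) as [_ [Hf1 Hlink]]. rewrite F0 in Hlink.
  apply (linked_subset E Rs _ SS) in Hlink; [|exact HS].
  destruct d as [|d]; [rewrite <- Fd; exact Hlink|].
  apply (linked_trans E k Rs Hray Hdisj SS a (f 1) b HS Hf1 (FT 1 ltac:(lia)) Hlink).
  apply (IH (f 1) ltac:(lia)). exists (fun i => f (S i)).
  split; [split; [reflexivity|split; [exact Fd|]]|]; intros i Hi; [apply Fe|apply FT]; lia.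
Qed.

Lemma linked_of_reach SS a b : (forall c, SS c -> c < k) ->
  reach link_graph (fun c => ~ SS c) a b -> linked E Rs SS a b.
Proof. intros HS [d [Hd HW]]. exact (linked_of_walk SS a b d HS Hd HW). Qed.

Lemma split_at_crossing (P : nat -> Prop) l x y :
  nth_error l 0 = Some x -> (exists c, c < k /\ P c /\ range (Rs c) x) ->
  ends_at l y -> (exists d, d < k /\ ~ P d /\ range (Rs d) y) ->
  exists l1 x' mid y' l2 c d, l = l1 ++ x' :: mid ++ y' :: l2 /\
    c < k /\ P c /\ range (Rs c) x' /\ d < k /\ ~ P d /\ range (Rs d) y' /\
    forall z, In z mid -> forall e, e < k -> ~ range (Rs e) z.
Proof.
  remember (length l) as m eqn:Hm. revert l x Hm.
  induction m as [m IH] using (well_founded_induction lt_wf).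
  intros [|x0 t] x Hm H0 [c [Hc [Pc Hx]]] Hl Hd'; [discriminate|]. injection H0 as <-.
  destruct Hd' as [d [Hd [Pd Hy]]].
  destruct t as [|t0 t'].
  - rewrite ends_at_single in Hl. subst y.
    rewrite (range_ray_unique k Rs Hdisj c d x0 Hc Hd Hx Hy) in Pc. contradiction.
  - assert (Hlt : ends_at (t0 :: t') y) by (apply (ends_at_cons x0); [congruence|exact Hl]).
    destruct (In_split_first (fun z => exists e, e < k /\ range (Rs e) z) (t0 :: t') y
                (ends_at_In _ _ Hlt)) as [mid [y' [l2 [Ht [[e [He Hy']] Hmid]]]]]; [eauto|].
    rewrite Ht in *.
    destruct (classic (P e)) as [Pe|Pe].
    + destruct (IH (length (y' :: l2)) ltac:(subst; simpl; rewrite length_app; simpl; lia)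
                  (y' :: l2) y' eq_refl eq_refl) as [l1 [x'' [mid' [y'' [l2' [c' [d' [Heq Hrest]]]]]]]].
      * exists e. auto.
      * apply (ends_at_app mid); [congruence|exact Hlt].
      * exists d. auto.
      * exists (x0 :: mid ++ l1), x'', mid', y'', l2', c', d'. split; [|exact Hrest].
        rewrite Heq. simpl. rewrite <- app_assoc. reflexivity.
    + exists [], x0, mid, y', l2, c, e. split; [reflexivity|].
      repeat (split; [assumption|]). intros z Hz e0 He0 Hon. apply (Hmid z Hz). eauto.
Qed.

Lemma walk_leaving_contains_link (P : nat -> Prop) L x y X :
  chain E L -> nth_error L 0 = Some x -> (exists c, c < k /\ P c /\ range (Rs c) x) ->
  ends_at L y -> (exists d, d < k /\ ~ P d /\ range (Rs d) y) -> avoids L X ->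
  exists c d l s s', c < k /\ d < k /\ P c /\ ~ P d /\ is_link E Rs (fun c => c < k) c d X l s s'.
Proof.
  intros HL HL0 Hx HLy Hy HLX.
  destruct (split_at_crossing P L x y HL0 Hx HLy Hy) as
      [l1 [x' [mid [y' [l2 [c [d [-> [Hc [Pc [[s Hs] [Hd [Pd [[s' Hs'] Hmid]]]]]]]]]]]]]].
  assert (Hsplit : l1 ++ x' :: mid ++ y' :: l2 = l1 ++ (x' :: mid ++ [y']) ++ l2)
    by (simpl; rewrite <- app_assoc; reflexivity).
  rewrite Hsplit in HL, HLX.
  destruct (link_of_walk E Rs (fun c => c < k) c d X (x' :: mid ++ [y']) s s') as [l Hl].
  - exact (chain_app_l _ l2 (chain_app_r l1 _ HL)).
  - rewrite Hs. reflexivity.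
  - rewrite Hs'. apply (ends_at_snoc (x' :: mid)).
  - intros z Hz. apply HLX, in_or_app. right. apply in_or_app. left. exact Hz.
  - intros z e Hz He Hon. destruct Hz as [<-|Hz]; [left; congruence|].
    apply in_app_or in Hz as [Hz|[<-|[]]]; [exfalso; exact (Hmid z Hz e He Hon)|right; congruence].
  - exists c, d, l, s, s'. auto.
Qed.

Lemma closed_set_blocked (P : nat -> Prop) : (forall c d, P c -> link_graph c d -> P d) ->
  exists X, forall c, c < k -> forall d, d < k -> P c -> ~ P d ->
    ~ exists l s s', is_link E Rs (fun c => c < k) c d X l s s'.
Proof.
  intros Hclos. apply finite_choice_incl.
  { intros c X Y HXY HcX d Hd Pc Pd [l [s [s' Hl]]].
    apply (HcX d Hd Pc Pd). exists l, s, s'. exact (is_link_incl E Rs _ _ _ _ _ _ _ _ HXY Hl). }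
  intros c Hc. apply finite_choice_incl.
  { intros d X Y HXY HdX Pc Pd [l [s [s' Hl]]].
    apply (HdX Pc Pd). exists l, s, s'. exact (is_link_incl E Rs _ _ _ _ _ _ _ _ HXY Hl). }
  intros d Hd. destruct (classic (P c /\ ~ P d)) as [[Pc Pd]|Hnot].
  - assert (Hnl : ~ linked E Rs (fun c => c < k) c d).
    { intros HL. apply Pd, (Hclos c d Pc). repeat split; assumption. }
    apply not_all_ex_not in Hnl as [X HX]. exists X. intros _ _. exact HX.
  - exists []. intros Pc Pd. exfalso. exact (Hnot (conj Pc Pd)).
Qed.

Variable r0 : nat -> V.
Hypothesis Hr0 : raylike E r0.
Hypothesis Hend : forall a, a < k -> ray_le E (Rs a) r0 /\ ray_le E r0 (Rs a).

(* The rays reachable from [a] are closed in the link graph, so some finite set blocks every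
   link leaving them; a walk from [Rs a] to [Rs b] through the end that avoids this set would
   contain such a link. *)
Theorem link_graph_strongly_connected a b :
  a < k -> b < k -> a <> b -> reach link_graph (fun _ => True) a b.
Proof.
  intros Ha Hb Hab. apply NNPP. intros Hno.
  set (Reached := fun c => c = a \/ reach link_graph (fun _ => True) a c).
  destruct (closed_set_blocked Reached) as [X HX].
  { intros c d [->|Hc] Hcd; right; [apply reach_arc, Hcd|].
    apply reach_trans with c; [exact Hc|apply reach_arc, Hcd|exact I]. }
  destruct (walk_via_raylike E r0 (Rs a) (Rs b) X Hr0 (proj1 (Hend a Ha)) (proj2 (Hend b Hb)))
    as [L [x [y [HL [HL0 [Hx [HLy [Hy HLX]]]]]]]].
  destruct (walk_leaving_contains_link Reached L x y X HL HL0) as [c [d [l [s [s' H]]]]];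
    [ |exact HLy| |exact HLX|].
  - exists a. split; [exact Ha|]. split; [left; reflexivity|exact Hx].
  - exists b. split; [exact Hb|]. split; [|exact Hy].
    intros [Hba|Hrb]; [exact (Hab (eq_sym Hba))|exact (Hno Hrb)].
  - destruct H as [Hc [Hd [Rc [Rd Hl]]]]. apply (HX c Hc d Hd Rc Rd). exists l, s, s'. exact Hl.
Qed.

End LinkGraph.

(** * Grid patterns in strongly connected digraphs *)

Definition chosen n (q : nat -> nat) z : Prop := exists i, 1 <= i <= n /\ z = q i.

Definition unchosen n (q : nat -> nat) z : Prop := ~ chosen n q z.

Definition distinct_below n k (q : nat -> nat) : Prop :=
  (forall i, 1 <= i <= n -> q i < k) /\
  (forall i j, 1 <= i <= n -> 1 <= j <= n -> q i = q j -> i = j).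

Definition hex_pattern G n q : Prop := forall i, 1 <= i < n ->
  reach G (unchosen n q) (q i) (q (S i)) /\ reach G (unchosen n q) (q (S i)) (q i).

Definition circ_pattern G n q : Prop :=
  (forall i, 1 <= i < n -> reach G (unchosen n q) (q i) (q (S i))) /\
  reach G (unchosen n q) (q n) (q 1).

Definition strongly_connected_below G k : Prop :=
  (forall a b, G a b -> a < k /\ b < k) /\
  (forall a b, a < k -> b < k -> a <> b -> reach G (fun _ => True) a b).

Lemma strongly_connected_converse G k :
  strongly_connected_below G k -> strongly_connected_below (converse G) k.
Proof.
  intros [HG Hsc]. split.
  - intros a b H. apply HG in H. tauto.
  - intros a b Ha Hb Hab. apply reach_converse. unfold converse. apply Hsc; auto.
Qed.

Section LongPath.
Variable G : nat -> nat -> Prop.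
Variable k : nat.
Hypothesis HG : strongly_connected_below G k.
Variable n : nat.
Variable v : nat -> nat.
Variable D : nat.
Hypothesis Hv : forall i, i < D -> G (v i) (v (S i)).
Hypothesis Hvinj : forall i j, i <= D -> j <= D -> v i = v j -> i = j.
Hypothesis HD : n * n <= D.

Definition on_path z : Prop := exists i, i <= D /\ z = v i.

Lemma path_vertex_lt j : 1 <= D -> j <= D -> v j < k.
Proof.
  intros HD1 Hj. destruct (Nat.eq_dec j D) as [->|Hne].
  - replace D with (S (D - 1)) at 1 by lia. apply (proj1 HG _ _ (Hv (D - 1) ltac:(lia))).
  - apply (proj1 HG _ _ (Hv j ltac:(lia))).
Qed.

Lemma walk_along_path a b : a <= b <= D ->
  walk G (fun z => exists i, a < i < b /\ z = v i) (v a) (v b) (b - a).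
Proof.
  intros Hab. apply (walk_sub G _ (v 0) (v D) D v a b); [repeat split; exact Hv|lia|].
  intros i Hi. exists i. split; [exact Hi|reflexivity].
Qed.

(* Follow a walk from [v D] back to [v 0] until it first enters [v 0 .. v (m-1)]; its part
   after the last preceding visit of the path is a jump back across [m]. *)
Lemma back_jump m : 1 <= m <= D -> exists x y d, m <= x <= D /\ y < m /\ 0 < d /\
  walk G (fun z => ~ on_path z) (v x) (v y) d.
Proof.
  intros Hm.
  assert (Hne : v D <> v 0) by (intros HH; apply Hvinj in HH; lia).
  destruct (proj2 HG _ _ (path_vertex_lt D ltac:(lia) (le_n D))
              (path_vertex_lt 0 ltac:(lia) ltac:(lia)) Hne) as [d0 [Hd0 [f [[F0 [Fd Fe]] _]]]].
  destruct (first_index (fun t => exists i, i < m /\ f t = v i) d0) as [q [Hq [[y [Hy Hfy]] Hmin]]].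
  { exists 0. split; [lia|exact Fd]. }
  assert (Hq0 : 0 < q).
  { destruct q; [|lia]. rewrite F0 in Hfy. apply Hvinj in Hfy; lia. }
  destruct (last_index (fun t => on_path (f t)) (q - 1)) as [p [Hp [[x [Hx Hfx]] Hmax]]].
  { exists D. split; [lia|exact F0]. }
  assert (Hxm : m <= x).
  { destruct (Nat.lt_ge_cases x m) as [Hlt|]; [|assumption].
    exfalso. apply (Hmin p); [lia|]. exists x. auto. }
  exists x, y, (q - p). split; [lia|]. split; [exact Hy|]. split; [lia|].
  rewrite <- Hfx, <- Hfy. apply (walk_sub G _ (v D) (v 0) d0 f p q); [repeat split; assumption|lia|].
  intros i Hi. apply Hmax. lia.
Qed.

(* The [n] consecutive path vertices from [v y] on, closed into a cycle by the jump. *)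
Lemma circ_pattern_of_long_jump x y d : 2 <= n -> x <= D -> 0 < d -> y + n - 1 <= x ->
  walk G (fun z => ~ on_path z) (v x) (v y) d -> exists q, distinct_below n k q /\ circ_pattern G n q.
Proof.
  intros Hn Hx Hd Hxy HW.
  set (q := fun i => v (y + i - 1)).
  assert (Hchosen : forall j, j <= D -> chosen n q (v j) -> y <= j <= y + n - 1).
  { intros j Hj [i [Hi Hvi]]. unfold q in Hvi. apply Hvinj in Hvi; lia. }
  exists q. split; [split|split].
  - intros i Hi. apply path_vertex_lt; lia.
  - intros i j Hi Hj HH. apply Hvinj in HH; lia.
  - intros i Hi. apply reach_arc. unfold q. replace (y + S i - 1) with (S (y + i - 1)) by lia.
    apply Hv. lia.
  - exists ((x - (y + n - 1)) + d). split; [lia|]. apply walk_cat with (v x).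
    + eapply walk_mono; [|exact (walk_along_path (y + n - 1) x ltac:(lia))].
      intros z [i [Hi ->]] Hzq. apply Hchosen in Hzq; lia.
    + replace (q 1) with (v y) by (unfold q; f_equal; lia).
      eapply walk_mono; [|exact HW].
      intros z Hz [i [Hi ->]]. apply Hz. exists (y + i - 1). split; [lia|reflexivity].
    + intros Hpos _ Hxq. apply Hchosen in Hxq; lia.
Qed.

Section ShortJumps.
Hypothesis Hshort : forall m x y d, 1 <= m <= D -> m <= x <= D -> y < m -> 0 < d ->
  walk G (fun z => ~ on_path z) (v x) (v y) d -> x < y + n - 1.

Definition in_window t hi z : Prop :=
  ~ on_path z \/ exists i, i <= D /\ z = v i /\ t + 3 <= i + n /\ i + 3 <= hi + n /\ i <> t.

(* Every back jump lands fewer than [n - 1] positions before its start, so alternating forward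
   runs and back jumps descends to [v t] without leaving the window. *)
Lemma descend_by_short_jumps t hi y : t < hi -> hi <= D -> t < y <= hi ->
  exists d, 0 < d /\ walk G (in_window t hi) (v y) (v t) d.
Proof.
  intros Ht Hhi. induction y as [y IH] using (well_founded_induction lt_wf). intros Hy.
  set (Window := in_window t hi).
  destruct (back_jump y ltac:(lia)) as [x [y' [dj [Hx [Hy' [Hdj HJ]]]]]].
  pose proof (Hshort y x y' dj ltac:(lia) Hx Hy' Hdj HJ) as Hxy.
  assert (Hin : forall i, i <= D -> t + 3 <= i + n -> i + 3 <= hi + n -> i <> t -> Window (v i)).
  { intros i Hi H1 H2 H3. right. exists i. auto. }
  assert (P1 : walk G Window (v y) (v x) (x - y)).
  { eapply walk_mono; [|exact (walk_along_path y x ltac:(lia))].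
    intros z [i [Hi ->]]. apply Hin; lia. }
  assert (P2 : walk G Window (v x) (v y') dj) by (eapply walk_mono; [|exact HJ]; left; assumption).
  destruct (Nat.le_gt_cases y' t) as [Hle|Hgt].
  - exists ((x - y) + dj + (t - y')). split; [lia|].
    apply walk_cat with (v y'); [apply walk_cat with (v x); auto; intros; apply Hin; lia| |].
    + eapply walk_mono; [|exact (walk_along_path y' t ltac:(lia))].
      intros z [i [Hi ->]]. apply Hin; lia.
    + intros; apply Hin; lia.
  - destruct (IH y' ltac:(lia) ltac:(lia)) as [d' [Hd' P3]].
    exists ((x - y) + dj + d'). split; [lia|].
    apply walk_cat with (v y'); [apply walk_cat with (v x); auto; intros; apply Hin; lia|exact P3|].
    intros; apply Hin; lia.
Qed.

(* Every [n]-th path vertex: forward along the path, back by short jumps. *)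
Lemma hex_pattern_of_short_jumps : 2 <= n -> exists q, distinct_below n k q /\ hex_pattern G n q.
Proof.
  intros Hn. set (q := fun l => v (l * n)).
  assert (Hchosen : forall j, j <= D -> chosen n q (v j) -> exists l, 1 <= l <= n /\ j = l * n).
  { intros j Hj [i [Hi Hvi]]. unfold q in Hvi. apply Hvinj in Hvi; [|exact Hj|nia]. eauto. }
  exists q. split; [split|].
  - intros i Hi. apply path_vertex_lt; nia.
  - intros i j Hi Hj HH. unfold q in HH. apply Hvinj in HH; [|nia|nia].
    apply Nat.mul_cancel_r in HH; lia.
  - intros l Hl. split.
    + exists n. split; [lia|].
      pose proof (walk_along_path (l * n) (S l * n) ltac:(nia)) as HW.
      replace (S l * n - l * n) with n in HW by nia.
      eapply walk_mono; [|exact HW].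
      intros z [i [Hi ->]] Hzq. apply Hchosen in Hzq as [l' [Hl' ->]]; [|nia].
      assert (l < l') by nia. assert (l' < S l) by nia. lia.
    + destruct (descend_by_short_jumps (l * n) (S l * n) (S l * n) ltac:(nia) ltac:(nia) ltac:(nia))
        as [d [Hd HW]].
      apply (reach_of_walk G _ _ _ _ d HW Hd).
      { intros HH. apply Hvinj in HH; nia. }
      intros z [Hz|[i [Hi [-> [H1 [H2 H3]]]]]] Hne Hzq.
      * apply Hz. destruct Hzq as [i [Hi ->]]. exists (i * n). split; [nia|reflexivity].
      * apply Hchosen in Hzq as [l' [Hl' ->]]; [|exact Hi].
        assert (l' <> l) by (intros ->; apply H3; reflexivity).
        assert (l' <> S l) by (intros ->; apply Hne; reflexivity).
        assert (l' < l \/ l' > S l) as [Hc|Hc] by lia; nia.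
Qed.

End ShortJumps.

Lemma pattern_of_long_path : 2 <= n ->
  exists q, distinct_below n k q /\ (hex_pattern G n q \/ circ_pattern G n q).
Proof.
  intros Hn.
  destruct (classic (exists m x y d, 1 <= m <= D /\ m <= x <= D /\ y < m /\ 0 < d /\
              walk G (fun z => ~ on_path z) (v x) (v y) d /\ y + n - 1 <= x))
    as [[m [x [y [d [Hm [Hx [Hy [Hd [HW Hxy]]]]]]]]]|Hlong].
  - destruct (circ_pattern_of_long_jump x y d Hn ltac:(lia) Hd Hxy HW) as [q [Hq Hc]].
    exists q. split; [exact Hq|right; exact Hc].
  - destruct hex_pattern_of_short_jumps as [q [Hq Hh]];
      [|exact Hn|exists q; split; [exact Hq|left; exact Hh]].
    intros m x y d Hm Hx Hy Hd HW. apply Nat.nlt_ge. intros Hxy. apply Hlong.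
    exists m, x, y, d. repeat (split; [assumption|]). lia.
Qed.

End LongPath.

Section Distance.
Variable G : nat -> nat -> Prop.
Variable k : nat.
Hypothesis HG : strongly_connected_below G k.

Definition is_dist a x d : Prop :=
  walk G (fun _ => True) a x d /\ forall d', walk G (fun _ => True) a x d' -> d <= d'.

(* The distance from vertex [0]; an arbitrary value unless [x < k]. *)
Definition dist x : nat := epsilon (inhabits 0) (is_dist 0 x).

Lemma dist_spec x : x < k -> is_dist 0 x (dist x).
Proof.
  intros Hx. unfold dist. apply epsilon_spec.
  assert (Hr : exists d, walk G (fun _ => True) 0 x d).
  { destruct (Nat.eq_dec x 0) as [->|Hne]; [exists 0; apply walk_nil|].
    destruct (proj2 HG 0 x ltac:(lia) Hx (not_eq_sym Hne)) as [d [_ HW]]. eauto. }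
  destruct Hr as [d Hd].
  destruct (first_index (fun d => walk G (fun _ => True) 0 x d) d Hd) as [q [_ [Hq Hmin]]].
  exists q. split; [exact Hq|]. intros d' Hd'. apply Nat.nlt_ge. intros Hlt. exact (Hmin d' Hlt Hd').
Qed.

Lemma is_dist_unique a x d d' : is_dist a x d -> is_dist a x d' -> d = d'.
Proof. intros [H1 H2] [H3 H4]. specialize (H2 _ H3). specialize (H4 _ H1). lia. Qed.

Lemma is_dist_prefix a x d f : is_walk G a x d f ->
  (forall d', walk G (fun _ => True) a x d' -> d <= d') -> forall i, i <= d -> is_dist a (f i) i.
Proof.
  intros Hf Hmin i Hi. pose proof Hf as [F0 [Fd Fe]].
  assert (Hpre : walk G (fun _ => True) a (f i) i).
  { pose proof (walk_sub G (fun _ => True) a x d f 0 i Hf) as HW.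
    rewrite F0, Nat.sub_0_r in HW. apply HW; [lia|auto]. }
  split; [exact Hpre|]. intros d' Hd'.
  assert (Hsuf : walk G (fun _ => True) (f i) x (d - i)).
  { pose proof (walk_sub G (fun _ => True) a x d f i d Hf) as HW.
    rewrite Fd in HW. apply HW; [lia|auto]. }
  specialize (Hmin _ (walk_cat G _ _ _ _ _ _ Hd' Hsuf (fun _ _ => I))). lia.
Qed.

Lemma geodesic x : x < k -> exists f, is_walk G 0 x (dist x) f /\
  forall i, i <= dist x -> f i < k /\ dist (f i) = i.
Proof.
  intros Hx. destruct (dist_spec x Hx) as [[f [Hf _]] Hmin].
  exists f. split; [exact Hf|]. intros i Hi.
  assert (Hfk : f i < k).
  { destruct Hf as [F0 [Fd Fe]]. destruct (Nat.eq_dec i (dist x)) as [->|Hne]; [congruence|].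
    apply (proj1 HG _ _ (Fe i ltac:(lia))). }
  split; [exact Hfk|]. apply (is_dist_unique 0 (f i)); [apply dist_spec, Hfk|].
  exact (is_dist_prefix 0 x (dist x) f Hf Hmin i Hi).
Qed.

Lemma walk_dist_decreasing x : x < k -> x <> 0 ->
  0 < dist x /\ walk G (fun z => dist z < dist x) 0 x (dist x).
Proof.
  intros Hx Hne. destruct (geodesic x Hx) as [f [Hf Hd]]. split.
  - destruct (dist x) eqn:E0; [|lia]. destruct Hf as [F0 [Fd _]]. congruence.
  - exists f. split; [exact Hf|]. intros i Hi. rewrite (proj2 (Hd i ltac:(lia))). lia.
Qed.

Lemma pattern_of_far_vertex n x : 2 <= n -> x < k -> n * n + 1 <= dist x ->
  exists q, distinct_below n k q /\ (hex_pattern G n q \/ circ_pattern G n q).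
Proof.
  intros Hn Hx HDx. destruct (geodesic x Hx) as [f [[F0 [Fd Fe]] Hd]].
  apply (pattern_of_long_path G k HG n f (n * n + 1)); [intros i Hi; apply Fe; lia| |lia|exact Hn].
  intros i j Hi Hj Hij.
  rewrite <- (proj2 (Hd i ltac:(lia))), <- (proj2 (Hd j ltac:(lia))). congruence.
Qed.

End Distance.

Lemma pigeonhole_fiber (key : nat -> nat) c : forall M L, NoDup L ->
  (forall x, In x L -> key x < M) -> M * c < length L ->
  exists v L', NoDup L' /\ c < length L' /\ forall x, In x L' -> In x L /\ key x = v.
Proof.
  induction M as [|M IH]; intros L Hnd HL Hlen.
  - destruct L as [|x L]; simpl in Hlen; [lia|]. specialize (HL x (or_introl eq_refl)). lia.
  - set (L1 := filter (fun x => key x =? M) L).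
    set (L2 := filter (fun x => negb (key x =? M)) L).
    assert (Hl : length L1 + length L2 = length L) by apply filter_length.
    destruct (Nat.lt_ge_cases c (length L1)) as [Hc|Hc].
    + exists M, L1. split; [apply NoDup_filter, Hnd|]. split; [exact Hc|].
      intros x Hx. apply filter_In in Hx as [Hx Hk]. apply Nat.eqb_eq in Hk. auto.
    + destruct (IH L2) as [v [L' [H1 [H2 H3]]]].
      * apply NoDup_filter, Hnd.
      * intros x Hx. apply filter_In in Hx as [Hx Hk].
        specialize (HL x Hx). destruct (Nat.eqb_spec (key x) M); simpl in Hk; [discriminate|lia].
      * simpl in Hlen. lia.
      * exists v, L'. split; [exact H1|]. split; [exact H2|]. intros x Hx.
        destruct (H3 x Hx) as [Hx1 Hx2]. split; [|exact Hx2]. apply filter_In in Hx1. tauto.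
Qed.

Lemma chosen_rev n q z : chosen n (fun i => q (n + 1 - i)) z <-> chosen n q z.
Proof. split; intros [i [Hi ->]]; exists (n + 1 - i); split; try lia; f_equal; lia. Qed.

Lemma pattern_of_converse_pattern G k n q : distinct_below n k q ->
  hex_pattern (converse G) n q \/ circ_pattern (converse G) n q ->
  exists q', distinct_below n k q' /\ (hex_pattern G n q' \/ circ_pattern G n q').
Proof.
  intros [Hk Hinj] [Hhex|[Hc1 Hc2]].
  - exists q. split; [split; assumption|]. left. intros i Hi.
    destruct (Hhex i Hi) as [A B]. split; apply reach_converse; assumption.
  - assert (Hunch : forall z, unchosen n q z -> unchosen n (fun i => q (n + 1 - i)) z).
    { intros z Hz Hq. apply Hz, chosen_rev, Hq. }
    exists (fun i => q (n + 1 - i)). split; [split|right; split].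
    + intros i Hi. apply Hk. lia.
    + intros i j Hi Hj HH. apply Hinj in HH; lia.
    + intros i Hi. apply (reach_mono G _ _ _ _ Hunch), reach_converse.
      replace (n + 1 - i) with (S (n - i)) by lia. replace (n + 1 - S i) with (n - i) by lia.
      apply Hc1. lia.
    + apply (reach_mono G _ _ _ _ Hunch), reach_converse.
      replace (n + 1 - n) with 1 by lia. replace (n + 1 - 1) with n by lia. exact Hc2.
Qed.

(* With all distances to and from [0] below [D], pigeonhole gives [n] vertices with the same
   distance from and to [0]; routing through [0] along shortest walks then avoids all of them. *)
Lemma circ_pattern_of_bounded_dist G k n D : strongly_connected_below G k -> 2 <= n ->
  (forall x, x < k -> dist G x < D) -> (forall x, x < k -> dist (converse G) x < D) ->
  D * (D * (n - 1)) < k - 1 -> exists q, distinct_below n k q /\ circ_pattern G n q.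
Proof.
  intros HG Hn Hd1 Hd2 Hk.
  pose proof (strongly_connected_converse G k HG) as HGc.
  destruct (pigeonhole_fiber (dist G) (D * (n - 1)) D (seq 1 (k - 1)))
    as [v1 [L1 [HL1nd [HL1len HL1]]]].
  { apply seq_NoDup. }
  { intros x Hx. apply in_seq in Hx. apply Hd1. lia. }
  { rewrite length_seq. exact Hk. }
  destruct (pigeonhole_fiber (dist (converse G)) (n - 1) D L1) as [v2 [L2 [HL2nd [HL2len HL2]]]];
    [exact HL1nd| |exact HL1len|].
  { intros x Hx. destruct (HL1 x Hx) as [Hx0 _]. apply in_seq in Hx0. apply Hd2. lia. }
  set (q := fun i => nth (i - 1) L2 0).
  assert (Hq : forall i, 1 <= i <= n ->
                1 <= q i < k /\ dist G (q i) = v1 /\ dist (converse G) (q i) = v2).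
  { intros i Hi. destruct (HL2 _ (nth_In L2 0 (ltac:(lia) : i - 1 < length L2))) as [Hx1 Hx2].
    destruct (HL1 _ Hx1) as [Hx3 Hx4]. apply in_seq in Hx3. unfold q. split; [lia|]. auto. }
  assert (Hroute : forall i j, 1 <= i <= n -> 1 <= j <= n -> reach G (unchosen n q) (q i) (q j)).
  { intros i j Hi Hj. destruct (Hq i Hi) as [Hik [_ Hiv]]. destruct (Hq j Hj) as [Hjk [Hjv _]].
    destruct (walk_dist_decreasing (converse G) k HGc (q i) ltac:(lia) ltac:(lia)) as [Hpos1 W1].
    destruct (walk_dist_decreasing G k HG (q j) ltac:(lia) ltac:(lia)) as [Hpos2 W2].
    exists (dist (converse G) (q i) + dist G (q j)). split; [lia|].
    apply walk_cat with 0.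
    - eapply walk_mono; [|exact (walk_converse G _ _ _ _ W1)].
      intros z Hz [l [Hl ->]]. destruct (Hq l Hl) as [_ [_ HH]]. lia.
    - eapply walk_mono; [|exact W2]. intros z Hz [l [Hl ->]]. destruct (Hq l Hl) as [_ [HH _]]. lia.
    - intros _ _ [l [Hl HH]]. destruct (Hq l Hl) as [HH2 _]. lia. }
  exists q. split; [split|split].
  - intros i Hi. apply Hq, Hi.
  - intros i j Hi Hj HH. unfold q in HH. apply (NoDup_nth L2 0) in HH; [lia|exact HL2nd|lia|lia].
  - intros i Hi. apply Hroute; lia.
  - apply Hroute; lia.
Qed.

(* [n * n + 1] is the geodesic length needed by [pattern_of_long_path]; the rest pays for the
   two pigeonholes of [circ_pattern_of_bounded_dist] with distances below [n * n + 1]. *)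
Definition grid_ray_count n : nat := (n * n + 1) * (n * n + 1) * n + 2.

Theorem hex_or_circ_pattern G k n : strongly_connected_below G k -> 2 <= n -> grid_ray_count n <= k ->
  exists q, distinct_below n k q /\ (hex_pattern G n q \/ circ_pattern G n q).
Proof.
  intros HG Hn HK. set (D := n * n + 1).
  destruct (classic (exists x, x < k /\ D <= dist G x)) as [[x [Hx Hd]]|H1].
  { exact (pattern_of_far_vertex G k HG n x Hn Hx Hd). }
  destruct (classic (exists x, x < k /\ D <= dist (converse G) x)) as [[x [Hx Hd]]|H2].
  { destruct (pattern_of_far_vertex (converse G) k (strongly_connected_converse G k HG) n x Hn Hx Hd)
      as [q [Hq Hp]].
    exact (pattern_of_converse_pattern G k n q Hq Hp). }
  destruct (circ_pattern_of_bounded_dist G k n D HG Hn) as [q [Hq Hc]].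
  - intros x Hx. apply Nat.nle_gt. intros Hd. eauto.
  - intros x Hx. apply Nat.nle_gt. intros Hd. eauto.
  - unfold grid_ray_count in HK. nia.
  - exists q. split; [exact Hq|right; exact Hc].
Qed.

(** * Building a grid along a schedule *)

(* [crossing s] is the non-ray edge of the grid routed at stage [s] (if any) and [stage w] the
   stage at which the branch vertex [w] is placed; along each ray the stages increase. *)
Definition schedule n (crossing : nat -> option ((nat * nat) * (nat * nat)))
    (stage : nat * nat -> nat) (HE : nat * nat -> nat * nat -> Prop) : Prop :=
  (forall i j, 1 <= i <= n -> 1 <= j -> stage (i, j) < stage (i, S j)) /\
  (forall s u v, crossing s = Some (u, v) ->
     stage u = s /\ stage v = s /\ grid_vert n u /\ grid_vert n v /\ fst u <> fst v) /\
  (forall u v, HE u v -> ray_edge n u v \/ crossing (stage u) = Some (u, v)).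

Definition pair_eq_dec (w u : nat * nat) : {w = u} + {w <> u}.
Proof. decide equality; apply Nat.eq_dec. Defined.

Section GridConstruction.
Context {V : Type} (E : V -> V -> Prop).
Variable k : nat.
Variable Rs : nat -> nat -> V.
Hypothesis Hray : forall m, m < k -> is_ray E (Rs m).
Hypothesis Hdisj : forall m m', m < k -> m' < k -> m <> m' -> rays_disjoint (Rs m) (Rs m').
Variable n : nat.
Variable q : nat -> nat.
Hypothesis Hq : distinct_below n k q.
Variable crossing : nat -> option ((nat * nat) * (nat * nat)).
Variable stage : nat * nat -> nat.
Variable HE : nat * nat -> nat * nat -> Prop.
Hypothesis Hsched : schedule n crossing stage HE.
Hypothesis Hlinked : forall s u v, crossing s = Some (u, v) ->
  linked E Rs (chosen n q) (q (fst u)) (q (fst v)).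

Definition choose_link a b X : list V * nat * nat :=
  epsilon (inhabits ([], 0, 0))
    (fun t => is_link E Rs (chosen n q) a b X (fst (fst t)) (snd (fst t)) (snd t)).

Definition prefixes p : list V := flat_map (fun i => map (Rs (q i)) (seq 0 p)) (seq 1 n).

(* The state before stage [s]: a bound beyond which no ray vertex is used yet, and the vertices
   of the crossing paths chosen so far.  Each crossing path avoids both. *)
Fixpoint state s : nat * list V :=
  match s with
  | 0 => (0, [])
  | S s =>
      let '(N, U) := state s in
      match crossing s with
      | Some (u, v) =>
          let '(p, a, b) := choose_link (q (fst u)) (q (fst v)) (U ++ prefixes N) in
          (S (Nat.max N (Nat.max a b)), U ++ p)
      | None => (S N, U)
      end
  end.

Definition frontier s : nat := fst (state s).
Definition used s : list V := snd (state s).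

Definition link_at s : list V * nat * nat :=
  match crossing s with
  | Some (u, v) => choose_link (q (fst u)) (q (fst v)) (used s ++ prefixes (frontier s))
  | None => ([], 0, 0)
  end.

Definition cross_path s : list V := fst (fst (link_at s)).
Definition cross_start s : nat := snd (fst (link_at s)).
Definition cross_end s : nat := snd (link_at s).

Lemma state_S s : frontier (S s) = S (Nat.max (frontier s) (Nat.max (cross_start s) (cross_end s))) /\
  used (S s) = used s ++ cross_path s.
Proof.
  unfold cross_start, cross_end, cross_path, link_at, frontier, used. simpl.
  destruct (state s) as [N U]. simpl.
  destruct (crossing s) as [[u v]|]; simpl.
  - destruct (choose_link _ _ _) as [[p a] b]. simpl. split; reflexivity.
  - rewrite app_nil_r. split; [lia|reflexivity].
Qed.

Lemma link_at_spec s u v : crossing s = Some (u, v) ->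
  is_link E Rs (chosen n q) (q (fst u)) (q (fst v)) (used s ++ prefixes (frontier s))
    (cross_path s) (cross_start s) (cross_end s).
Proof.
  intros Hc. unfold cross_path, cross_start, cross_end, link_at, choose_link. rewrite Hc.
  apply (epsilon_spec (inhabits ([], 0, 0))
    (fun t => is_link E Rs (chosen n q) _ _ _ (fst (fst t)) (snd (fst t)) (snd t))).
  destruct (Hlinked s u v Hc (used s ++ prefixes (frontier s))) as [l [a [b Hl]]].
  exists (l, a, b). exact Hl.
Qed.

Lemma In_prefixes i t p : 1 <= i <= n -> t < p -> In (Rs (q i) t) (prefixes p).
Proof.
  intros Hi Ht. apply in_flat_map. exists i. split; [apply in_seq; lia|].
  apply in_map, in_seq. lia.
Qed.

Lemma frontier_mono s s' : s <= s' -> frontier s <= frontier s'.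
Proof. induction 1; [lia|]. rewrite (proj1 (state_S m)). lia. Qed.

Lemma used_mono s s' : s <= s' -> incl (used s) (used s').
Proof.
  induction 1; [apply incl_refl|].
  rewrite (proj2 (state_S m)). apply incl_appl. assumption.
Qed.

Lemma cross_ends_beyond_frontier s u v : crossing s = Some (u, v) ->
  frontier s <= cross_start s /\ frontier s <= cross_end s.
Proof.
  intros Hc. destruct (link_at_spec s u v Hc) as [_ [H0 [Hl [Hav _]]]].
  destruct (proj1 (proj2 Hsched) s u v Hc) as [_ [_ [[Hu _] [[Hv _] _]]]].
  apply avoids_app in Hav as [_ Hav].
  split; apply Nat.nlt_ge; intros Hlt.
  - apply (Hav _ (nth_error_In _ _ H0)), In_prefixes; assumption.
  - apply (Hav _ (ends_at_In _ _ Hl)), In_prefixes; assumption.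
Qed.

Lemma cross_paths_disjoint s s' u v u' v' x : s < s' ->
  crossing s = Some (u, v) -> crossing s' = Some (u', v') ->
  In x (cross_path s) -> In x (cross_path s') -> False.
Proof.
  intros Hlt Hc Hc' Hx Hx'.
  destruct (link_at_spec s' u' v' Hc') as [_ [_ [_ [Hav _]]]].
  apply (Hav x Hx'), in_or_app. left.
  apply (used_mono (S s) s'); [lia|]. rewrite (proj2 (state_S s)). apply in_or_app. right. exact Hx.
Qed.

Definition pos w : nat :=
  match crossing (stage w) with
  | Some (u, v) =>
      if pair_eq_dec w u then cross_start (stage w)
      else if pair_eq_dec w v then cross_end (stage w)
      else frontier (stage w)
  | None => frontier (stage w)
  end.

Lemma pos_bounds w : frontier (stage w) <= pos w < frontier (S (stage w)).
Proof.
  rewrite (proj1 (state_S (stage w))). unfold pos.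
  destruct (crossing (stage w)) as [[u v]|] eqn:Hc; [|lia].
  destruct (cross_ends_beyond_frontier _ _ _ Hc).
  destruct (pair_eq_dec w u); [lia|]. destruct (pair_eq_dec w v); lia.
Qed.

Lemma pos_crossing s u v : crossing s = Some (u, v) -> pos u = cross_start s /\ pos v = cross_end s.
Proof.
  intros Hc. destruct (proj1 (proj2 Hsched) s u v Hc) as [Hu [Hv [_ [_ Hne]]]].
  unfold pos. rewrite Hu, Hv, Hc.
  destruct (pair_eq_dec u u) as [_|]; [|contradiction].
  destruct (pair_eq_dec v u) as [->|_]; [contradiction|].
  destruct (pair_eq_dec v v) as [_|]; [|contradiction]. split; reflexivity.
Qed.

Lemma pos_step i j : 1 <= i <= n -> 1 <= j -> pos (i, j) < pos (i, S j).
Proof.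
  intros Hi Hj. pose proof (pos_bounds (i, j)). pose proof (pos_bounds (i, S j)).
  pose proof (frontier_mono _ _ (proj1 Hsched i j Hi Hj)). lia.
Qed.

Lemma pos_lt i j j' : 1 <= i <= n -> 1 <= j -> j < j' -> pos (i, j) < pos (i, j').
Proof.
  intros Hi Hj. induction 1 as [|m Hm IH]; [apply pos_step; assumption|].
  pose proof (pos_step i m Hi ltac:(lia)). lia.
Qed.

Lemma pos_le i j j' : 1 <= i <= n -> 1 <= j -> j <= j' -> pos (i, j) <= pos (i, j').
Proof.
  intros Hi Hj H. destruct (Nat.eq_dec j j') as [->|Hne]; [lia|].
  pose proof (pos_lt i j j' Hi Hj ltac:(lia)). lia.
Qed.


Definition branch (w : nat * nat) : V := Rs (q (fst w)) (pos w).

Definition ray_segment (u v : nat * nat) : list V :=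
  map (Rs (q (fst u))) (seq (pos u) (S (pos v - pos u))).

Definition subdiv_path (u v : nat * nat) : list V :=
  if (fst u =? fst v) && (snd v =? S (snd u)) then ray_segment u v else cross_path (stage u).

Lemma subdiv_path_ray i j : subdiv_path (i, j) (i, S j) = ray_segment (i, j) (i, S j).
Proof. unfold subdiv_path. simpl. rewrite !Nat.eqb_refl. reflexivity. Qed.

Lemma subdiv_path_crossing s u v : crossing s = Some (u, v) -> subdiv_path u v = cross_path s.
Proof.
  intros Hc. destruct (proj1 (proj2 Hsched) s u v Hc) as [Hu [_ [_ [_ Hne]]]].
  unfold subdiv_path. destruct (Nat.eqb_spec (fst u) (fst v)); [contradiction|].
  simpl. rewrite Hu. reflexivity.
Qed.

Lemma In_ray_segment i j x : 1 <= i <= n -> 1 <= j -> In x (ray_segment (i, j) (i, S j)) ->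
  exists t, pos (i, j) <= t <= pos (i, S j) /\ x = Rs (q i) t.
Proof.
  intros Hi Hj Hx. pose proof (pos_step i j Hi Hj).
  apply in_map_iff in Hx as [t [<- Ht]]. apply in_seq in Ht. exists t. split; [lia|reflexivity].
Qed.

Lemma inner_ray_segment i j x : 1 <= i <= n -> 1 <= j -> inner (ray_segment (i, j) (i, S j)) x ->
  exists t, pos (i, j) < t < pos (i, S j) /\ x = Rs (q i) t.
Proof.
  intros Hi Hj [i0 [H1 [H2 H3]]]. pose proof (pos_step i j Hi Hj).
  unfold ray_segment in *. rewrite length_map, length_seq in H2.
  rewrite nth_error_map, nth_error_seq in H3.
  destruct (Nat.ltb_spec i0 (S (pos (i, S j) - pos (i, j)))); [|discriminate].
  injection H3 as <-. exists (pos (i, j) + i0). split; [lia|reflexivity].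
Qed.

Lemma ray_segment_spec i j : 1 <= i <= n -> 1 <= j ->
  is_dipath E (ray_segment (i, j) (i, S j)) /\
  nth_error (ray_segment (i, j) (i, S j)) 0 = Some (branch (i, j)) /\
  ends_at (ray_segment (i, j) (i, S j)) (branch (i, S j)).
Proof.
  intros Hi Hj. pose proof (pos_step i j Hi Hj). destruct (Hray (q i) (proj1 Hq i Hi)) as [Hinj He].
  split; [split; [|split]|split].
  - discriminate.
  - apply Injective_map_NoDup; [intros a b; apply Hinj|apply seq_NoDup].
  - apply chain_map_seq. intros; apply He.
  - reflexivity.
  - unfold branch, ray_segment. simpl fst.
    replace (pos (i, S j)) with (pos (i, j) + (pos (i, S j) - pos (i, j))) at 2
      by lia. apply ends_at_map_seq.
Qed.

Lemma chosen_ray_vertex_inj i i' t t' : 1 <= i <= n -> 1 <= i' <= n ->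
  Rs (q i) t = Rs (q i') t' -> i = i' /\ t = t'.
Proof.
  intros Hi Hi' Heq.
  assert (Hqq : q i = q i').
  { destruct (Nat.eq_dec (q i) (q i')) as [|Hne]; [assumption|]. exfalso.
    exact (Hdisj (q i) (q i') (proj1 Hq i Hi) (proj1 Hq i' Hi') Hne t t' Heq). }
  apply (proj2 Hq) in Hqq; [|exact Hi|exact Hi']. subst i'. split; [reflexivity|].
  destruct (Hray (q i) (proj1 Hq i Hi)) as [Hinj _]. exact (Hinj _ _ Heq).
Qed.

Lemma ray_vertex_eq_branch i t w : 1 <= i <= n -> grid_vert n w -> Rs (q i) t = branch w ->
  fst w = i /\ t = pos w.
Proof.
  intros Hi [Hw1 _] Heq. destruct (chosen_ray_vertex_inj i (fst w) t (pos w) Hi Hw1 Heq).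
  split; [symmetry|]; assumption.
Qed.

Lemma inner_ray_segment_not_branch i j t w : 1 <= i <= n -> 1 <= j ->
  pos (i, j) < t < pos (i, S j) -> grid_vert n w -> Rs (q i) t <> branch w.
Proof.
  intros Hi Hj Ht Hw Heq. destruct (ray_vertex_eq_branch i t w Hi Hw Heq) as [Hw1 ->].
  destruct w as [i' j']. simpl in Hw1. subst i'. destruct Hw as [_ Hj']. simpl in Hj'.
  destruct (Nat.le_gt_cases j' j).
  - pose proof (pos_le i j' j Hi Hj' ltac:(lia)). lia.
  - pose proof (pos_le i (S j) j' Hi ltac:(lia) ltac:(lia)). lia.
Qed.

Lemma branch_injective u v : grid_vert n u -> grid_vert n v -> branch u = branch v -> u = v.
Proof.
  intros Hu Hv Heq. destruct u as [i j], v as [i' j']. destruct Hu as [Hi Hj]. simpl in *.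
  destruct (ray_vertex_eq_branch i (pos (i, j)) (i', j') Hi Hv Heq) as [Hii Hp].
  simpl in Hii. subst i'. destruct Hv as [_ Hj']. simpl in Hj'.
  destruct (Nat.lt_total j j') as [Hlt|[->|Hlt]]; [|reflexivity|].
  - pose proof (pos_lt i j j' Hi Hj Hlt). lia.
  - pose proof (pos_lt i j' j Hi Hj' Hlt). lia.
Qed.

Lemma subdiv_path_spec u v : HE u v ->
  is_dipath E (subdiv_path u v) /\ nth_error (subdiv_path u v) 0 = Some (branch u) /\
  ends_at (subdiv_path u v) (branch v).
Proof.
  intros Huv. destruct (proj2 (proj2 Hsched) u v Huv) as [[i [j [Hi [Hj [-> ->]]]]]|Hc].
  - rewrite subdiv_path_ray. exact (ray_segment_spec i j Hi Hj).
  - rewrite (subdiv_path_crossing _ _ _ Hc). destruct (link_at_spec _ _ _ Hc) as [H1 [H2 [H3 _]]].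
    destruct (pos_crossing _ _ _ Hc) as [Hpu Hpv]. unfold branch. rewrite Hpu, Hpv. auto.
Qed.

Lemma subdiv_inner_not_branch u v x w : HE u v -> inner (subdiv_path u v) x ->
  grid_vert n w -> branch w <> x.
Proof.
  intros Huv Hx Hw Hwx. destruct (proj2 (proj2 Hsched) u v Huv) as [[i [j [Hi [Hj [-> ->]]]]]|Hc].
  - rewrite subdiv_path_ray in Hx. destruct (inner_ray_segment i j x Hi Hj Hx) as [t [Ht ->]].
    exact (inner_ray_segment_not_branch i j t w Hi Hj Ht Hw (eq_sym Hwx)).
  - rewrite (subdiv_path_crossing _ _ _ Hc) in Hx.
    destruct (link_at_spec _ _ _ Hc) as [_ [_ [_ [_ Hin]]]].
    apply (Hin x Hx (q (fst w)));
      [exists (fst w); split; [apply Hw|reflexivity]|exists (pos w); exact Hwx].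
Qed.

Lemma inner_ray_segment_meets i j x u' v' : 1 <= i <= n -> 1 <= j -> HE u' v' ->
  inner (ray_segment (i, j) (i, S j)) x -> In x (subdiv_path u' v') -> (i, j) = u' /\ (i, S j) = v'.
Proof.
  intros Hi Hj Hu'v' Hx Hx'. destruct (inner_ray_segment i j x Hi Hj Hx) as [t [Ht ->]].
  destruct (proj2 (proj2 Hsched) u' v' Hu'v') as [[i' [j' [Hi' [Hj' [-> ->]]]]]|Hc'].
  - rewrite subdiv_path_ray in Hx'. destruct (In_ray_segment i' j' _ Hi' Hj' Hx') as [t' [Ht' Heq]].
    destruct (chosen_ray_vertex_inj i i' t t' Hi Hi' Heq) as [<- <-].
    destruct (Nat.lt_total j j') as [Hlt|[<-|Hlt]]; [exfalso| split; reflexivity|exfalso].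
    + pose proof (pos_le i (S j) j' Hi ltac:(lia) ltac:(lia)). lia.
    + pose proof (pos_le i (S j') j Hi ltac:(lia) ltac:(lia)). lia.
  - exfalso. rewrite (subdiv_path_crossing _ _ _ Hc') in Hx'.
    destruct (link_at_spec _ _ _ Hc') as [_ [H0 [Hl [_ Hin]]]].
    destruct (pos_crossing _ _ _ Hc') as [Hpu Hpv].
    destruct (proj1 (proj2 Hsched) _ _ _ Hc') as [_ [_ [Hgu [Hgv _]]]].
    destruct (In_first_last_or_inner _ _ Hx') as [Hz|[Hz|Hz]].
    + apply (inner_ray_segment_not_branch i j t u' Hi Hj Ht Hgu). unfold branch. rewrite Hpu. congruence.
    + apply (inner_ray_segment_not_branch i j t v' Hi Hj Ht Hgv). unfold branch. rewrite Hpv.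
      exact (ends_at_unique _ _ _ Hz Hl).
    + apply (Hin _ Hz (q i)); [exists i; split; [exact Hi|reflexivity]|exists t; reflexivity].
Qed.

Lemma inner_cross_path_meets s u v x u' v' : crossing s = Some (u, v) -> HE u' v' ->
  inner (cross_path s) x -> In x (subdiv_path u' v') -> u = u' /\ v = v'.
Proof.
  intros Hc Hu'v' Hx Hx'. destruct (link_at_spec _ _ _ Hc) as [_ [_ [_ [_ Hin]]]].
  destruct (proj2 (proj2 Hsched) u' v' Hu'v') as [[i' [j' [Hi' [Hj' [-> ->]]]]]|Hc'].
  - exfalso. rewrite subdiv_path_ray in Hx'.
    destruct (In_ray_segment i' j' _ Hi' Hj' Hx') as [t' [_ Heq]].
    apply (Hin x Hx (q i')); [exists i'; split; [exact Hi'|reflexivity]|exists t'; symmetry; exact Heq].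
  - rewrite (subdiv_path_crossing _ _ _ Hc') in Hx'. pose proof (inner_In _ _ Hx) as Hxs.
    destruct (Nat.lt_total s (stage u')) as [Hlt|[Heq|Hlt]].
    + exfalso. exact (cross_paths_disjoint _ _ _ _ _ _ x Hlt Hc Hc' Hxs Hx').
    + rewrite <- Heq, Hc in Hc'. injection Hc' as -> ->. split; reflexivity.
    + exfalso. exact (cross_paths_disjoint _ _ _ _ _ _ x Hlt Hc' Hc Hx' Hxs).
Qed.

Theorem grid_subdivision_of_schedule :
  is_subdivision E (grid_vert n) HE branch subdiv_path /\ rays_correspond n k Rs branch subdiv_path.
Proof.
  split; [split; [|split; [|split]]|].
  - exact branch_injective.
  - exact subdiv_path_spec.
  - intros u v x Huv Hx [w [Hw Hwx]]. exact (subdiv_inner_not_branch u v x w Huv Hx Hw Hwx).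
  - intros u v u' v' x Huv Hu'v' Hx Hx'.
    destruct (proj2 (proj2 Hsched) u v Huv) as [[i [j [Hi [Hj [-> ->]]]]]|Hc].
    + rewrite subdiv_path_ray in Hx. exact (inner_ray_segment_meets i j x u' v' Hi Hj Hu'v' Hx Hx').
    + rewrite (subdiv_path_crossing _ _ _ Hc) in Hx.
      exact (inner_cross_path_meets _ _ _ x u' v' Hc Hu'v' Hx Hx').
  - intros i Hi. exists (q i), (fun j => pos (i, j)). split; [exact (proj1 Hq i Hi)|].
    intros j Hj. split; [exact (pos_step i j Hi Hj)|]. split; [reflexivity|apply subdiv_path_ray].
Qed.

End GridConstruction.

(** * Schedules for the hexagonal and circular grids *)

Lemma odd_iff_mod2 i : Nat.odd i = true <-> i mod 2 = 1.
Proof.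
  rewrite Nat.odd_spec. split.
  - intros [m ->]. rewrite Nat.add_comm, Nat.mul_comm, Nat.Div0.mod_add. reflexivity.
  - intros H. exists (i / 2). pose proof (Nat.div_mod_eq i 2). lia.
Qed.

Lemma even_iff_mod2 i : Nat.even i = true <-> i mod 2 = 0.
Proof.
  rewrite Nat.even_spec. split.
  - intros [m ->]. rewrite Nat.mul_comm, Nat.Div0.mod_mul. reflexivity.
  - intros H. exists (i / 2). pose proof (Nat.div_mod_eq i 2). lia.
Qed.

Lemma div_mod_of_lt n a b : b < n -> (a * n + b) / n = a /\ (a * n + b) mod n = b.
Proof.
  intros Hb. split.
  - symmetry. apply (Nat.div_unique _ _ _ b); lia.
  - symmetry. apply (Nat.mod_unique _ _ a); lia.
Qed.

Ltac div_mod_facts x c :=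
  pose proof (Nat.div_mod_eq x c); pose proof (Nat.mod_upper_bound x c ltac:(lia)).

Section HexSchedule.
Variable n : nat.

Definition hex_rung i j : bool := (1 <=? i) && (i <? n) && (i mod 2 =? j mod 2).

Definition rung_down j : bool := (j mod 4 =? 1) || (j mod 4 =? 2).

(* Stage [(j-1) n + (i-1)] handles the rung between rows [i] and [i+1] in column [j]; the
   lower end of a rung shares the stage of its upper end. *)
Definition hex_crossing s : option ((nat * nat) * (nat * nat)) :=
  let j := s / n + 1 in let i := s mod n + 1 in
  if hex_rung i j then (if rung_down j then Some ((i, j), (i + 1, j)) else Some ((i + 1, j), (i, j)))
  else None.

Definition hex_stage (w : nat * nat) : nat := (snd w - 1) * n + (fst w - 1) -
  (if (2 <=? fst w) && hex_rung (fst w - 1) (snd w) then 1 else 0).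

Lemma hex_rung_true i j : hex_rung i j = true <-> 1 <= i < n /\ i mod 2 = j mod 2.
Proof. unfold hex_rung. rewrite !andb_true_iff, Nat.leb_le, Nat.ltb_lt, Nat.eqb_eq. tauto. Qed.

Lemma hex_stage_upper i j : hex_rung i j = true -> hex_stage (i, j) = (j - 1) * n + (i - 1).
Proof.
  intros H. apply hex_rung_true in H. unfold hex_stage. cbn [fst snd].
  destruct ((2 <=? i) && hex_rung (i - 1) j) eqn:E.
  - apply andb_true_iff in E as [E1 E2]. apply Nat.leb_le in E1. apply hex_rung_true in E2.
    exfalso. div_mod_facts i 2. div_mod_facts (i - 1) 2. div_mod_facts j 2. lia.
  - nia.
Qed.

Lemma hex_stage_lower i j : hex_rung i j = true -> hex_stage (S i, j) = (j - 1) * n + (i - 1).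
Proof.
  intros H. unfold hex_stage. cbn [fst snd]. replace (S i - 1) with i by lia. rewrite H.
  apply hex_rung_true in H. replace (2 <=? S i) with true by (symmetry; apply Nat.leb_le; lia).
  simpl. nia.
Qed.

Lemma hex_crossing_rows s u v : hex_crossing s = Some (u, v) ->
  hex_stage u = s /\ hex_stage v = s /\ grid_vert n u /\ grid_vert n v /\
  snd u = snd v /\ 1 <= s mod n + 1 < n /\
  ((fst u = s mod n + 1 /\ fst v = s mod n + 2) \/ (fst v = s mod n + 1 /\ fst u = s mod n + 2)).
Proof.
  intros Hc. unfold hex_crossing in Hc.
  set (i := s mod n + 1) in *. set (j := s / n + 1) in *.
  assert (Hs : s = (j - 1) * n + (i - 1)).
  { unfold i, j. replace (s / n + 1 - 1) with (s / n) by lia.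
    replace (s mod n + 1 - 1) with (s mod n) by lia. rewrite Nat.mul_comm. apply Nat.div_mod_eq. }
  destruct (hex_rung i j) eqn:Hp; [|discriminate].
  pose proof (hex_stage_upper i j Hp) as H1. pose proof (hex_stage_lower i j Hp) as H2.
  apply hex_rung_true in Hp. replace (i + 1) with (S i) in * by lia.
  destruct (rung_down j); injection Hc as <- <-; unfold grid_vert; cbn [fst snd]; lia.
Qed.

Lemma hex_edge_scheduled u v : hex_edge n u v ->
  ray_edge n u v \/ hex_crossing (hex_stage u) = Some (u, v).
Proof.
  intros [Hr|[[i [j [Hi [Hj [-> [-> Hc]]]]]]|[i [j [Hi [Hj [-> [-> Hc]]]]]]]];
    [left; exact Hr|right|right];
    rewrite odd_iff_mod2, even_iff_mod2 in Hc;
    (assert (Hp : hex_rung i j = true)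
      by (apply hex_rung_true; split; [lia|];
          div_mod_facts j 4; div_mod_facts j 2; div_mod_facts i 2; lia));
    [rewrite (hex_stage_upper i j Hp)|rewrite (hex_stage_lower i j Hp)];
    unfold hex_crossing; destruct (div_mod_of_lt n (j - 1) (i - 1) ltac:(lia)) as [D1 D2];
    rewrite D1, D2; replace (i - 1 + 1) with i by lia; replace (j - 1 + 1) with j by lia; rewrite Hp.
  - replace (rung_down j) with true
      by (symmetry; unfold rung_down; rewrite orb_true_iff, !Nat.eqb_eq; lia).
    repeat f_equal. lia.
  - replace (rung_down j) with false
      by (symmetry; unfold rung_down; rewrite orb_false_iff, !Nat.eqb_neq; lia).
    repeat f_equal. lia.
Qed.

Lemma hex_schedule : schedule n hex_crossing hex_stage (hex_edge n).
Proof.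
  split; [|split].
  - intros i j Hi Hj. unfold hex_stage. cbn [fst snd]. replace (S j - 1) with j by lia.
    assert (HH : j * n = (j - 1) * n + n) by (destruct j; [lia|]; simpl; rewrite Nat.sub_0_r; lia).
    destruct ((2 <=? i) && hex_rung (i - 1) j) eqn:E1;
      destruct ((2 <=? i) && hex_rung (i - 1) (S j)) eqn:E2;
      try (apply andb_true_iff in E2 as [E2 _]; apply Nat.leb_le in E2); lia.
  - intros s u v Hc. destruct (hex_crossing_rows s u v Hc) as [Hu [Hv [Hgu [Hgv [_ [_ Hrows]]]]]].
    repeat (split; [assumption|]). lia.
  - exact hex_edge_scheduled.
Qed.

End HexSchedule.

Lemma parity_cases j : 1 <= j ->
  (exists b, j = 2 * b + 1 /\ Nat.odd j = true) \/ (exists b, j = 2 * b + 2 /\ Nat.odd j = false).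
Proof.
  intros Hj. div_mod_facts j 2. destruct (Nat.eq_dec (j mod 2) 1) as [H1|H1].
  - left. exists (j / 2). split; [lia|]. apply odd_iff_mod2, H1.
  - right. exists (j / 2 - 1). split; [lia|].
    destruct (Nat.odd j) eqn:E; [apply odd_iff_mod2 in E; lia|reflexivity].
Qed.

Section CircSchedule.
Variable n : nat.
Hypothesis Hn : 2 <= n.

(* Columns [2b+1], [2b+2] form block [b], with stages [b n .. b n + n - 1]: first the edge from
   row [1] to row [2], then the diagonals from row [r+1] to row [r+2], then the edge from row [n]
   back to row [1]. *)
Definition circ_crossing s : option ((nat * nat) * (nat * nat)) :=
  let b := s / n in let r := s mod n in let j := 2 * b + 1 in
  if r =? 0 then Some ((1, j), (2, j))
  else if r =? n - 1 then Some ((n, S j), (1, S j))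
  else Some ((r + 1, S j), (r + 2, j)).

Definition circ_stage (w : nat * nat) : nat :=
  let b := (snd w - 1) / 2 in
  if Nat.odd (snd w) then (if fst w =? 1 then b * n else b * n + fst w - 2)
  else (if fst w =? 1 then b * n + n - 1 else b * n + fst w - 1).

Lemma circ_stage_odd i j b : j = 2 * b + 1 ->
  circ_stage (i, j) = if i =? 1 then b * n else b * n + i - 2.
Proof.
  intros ->. unfold circ_stage. cbn [fst snd]. replace (2 * b + 1 - 1) with (b * 2 + 0) by lia.
  rewrite (proj1 (div_mod_of_lt 2 b 0 ltac:(lia))).
  replace (Nat.odd (2 * b + 1)) with true; [reflexivity|].
  symmetry. apply odd_iff_mod2. replace (2 * b + 1) with (1 + b * 2) by lia.
  rewrite Nat.Div0.mod_add. reflexivity.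
Qed.

Lemma circ_stage_even i j b : j = 2 * b + 2 ->
  circ_stage (i, j) = if i =? 1 then b * n + n - 1 else b * n + i - 1.
Proof.
  intros ->. unfold circ_stage. cbn [fst snd]. replace (2 * b + 2 - 1) with (b * 2 + 1) by lia.
  rewrite (proj1 (div_mod_of_lt 2 b 1 ltac:(lia))).
  destruct (Nat.odd (2 * b + 2)) eqn:E; [|reflexivity].
  apply odd_iff_mod2 in E. replace (2 * b + 2) with (0 + (b + 1) * 2) in E by lia.
  rewrite Nat.Div0.mod_add in E. discriminate.
Qed.

Lemma circ_crossing_rows s u v : circ_crossing s = Some (u, v) ->
  circ_stage u = s /\ circ_stage v = s /\ grid_vert n u /\ grid_vert n v /\
  ((fst v = S (fst u) /\ 1 <= fst u < n) \/ (fst u = n /\ fst v = 1)).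
Proof.
  intros Hc. unfold circ_crossing in Hc.
  set (b := s / n) in *. set (r := s mod n) in *.
  assert (Hs : s = b * n + r) by (unfold b, r; rewrite Nat.mul_comm; apply Nat.div_mod_eq).
  assert (Hr : r < n) by (apply Nat.mod_upper_bound; lia).
  destruct (Nat.eqb_spec r 0) as [Hr0|Hr0]; [|destruct (Nat.eqb_spec r (n - 1)) as [Hr1|Hr1]];
    injection Hc as <- <-; unfold grid_vert; cbv [fst snd].
  - rewrite !(circ_stage_odd _ _ b) by lia. simpl. lia.
  - rewrite !(circ_stage_even _ _ b) by lia.
    destruct (Nat.eqb_spec n 1); [lia|]. simpl. lia.
  - rewrite (circ_stage_even _ _ b), (circ_stage_odd _ _ b) by lia.
    destruct (Nat.eqb_spec (r + 1) 1); [lia|]. destruct (Nat.eqb_spec (r + 2) 1); lia.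
Qed.

Lemma circ_edge_scheduled u v : circ_edge n u v ->
  ray_edge n u v \/ circ_crossing (circ_stage u) = Some (u, v).
Proof.
  intros [Hr|[[i [j [Hi [Hj [Ho [-> ->]]]]]]|[[j [_ [Hj [Ho [-> ->]]]]]|[j [_ [Hj [He [-> ->]]]]]]]];
    [left; exact Hr|right|right|right].
  - destruct (parity_cases j Hj) as [[b [-> _]]|[b [-> Hb]]]; [|congruence].
    rewrite (circ_stage_even _ _ b) by lia. destruct (Nat.eqb_spec i 1); [lia|].
    unfold circ_crossing. replace (b * n + i - 1) with (b * n + (i - 1)) by lia.
    destruct (div_mod_of_lt n b (i - 1) ltac:(lia)) as [D1 D2]. rewrite D1, D2.
    destruct (Nat.eqb_spec (i - 1) 0); [lia|]. destruct (Nat.eqb_spec (i - 1) (n - 1)); [lia|].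
    repeat f_equal; lia.
  - destruct (parity_cases j Hj) as [[b [-> _]]|[b [-> Hb]]]; [|congruence].
    rewrite (circ_stage_odd _ _ b) by lia. unfold circ_crossing. simpl.
    replace (b * n) with (b * n + 0) by lia.
    destruct (div_mod_of_lt n b 0 ltac:(lia)) as [D1 D2]. rewrite D1, D2. reflexivity.
  - destruct (parity_cases j Hj) as [[b [-> Hb]]|[b [-> _]]];
      [rewrite <- Nat.negb_even, He in Hb; discriminate|].
    rewrite (circ_stage_even _ _ b) by lia. destruct (Nat.eqb_spec n 1); [lia|].
    unfold circ_crossing. replace (b * n + n - 1) with (b * n + (n - 1)) by lia.
    destruct (div_mod_of_lt n b (n - 1) ltac:(lia)) as [D1 D2]. rewrite D1, D2.
    destruct (Nat.eqb_spec (n - 1) 0); [lia|]. rewrite Nat.eqb_refl.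
    repeat f_equal; lia.
Qed.

Lemma circ_schedule : schedule n circ_crossing circ_stage (circ_edge n).
Proof.
  split; [|split].
  - intros i j Hi Hj. destruct (parity_cases j Hj) as [[b [-> _]]|[b [-> _]]].
    + rewrite (circ_stage_odd _ _ b), (circ_stage_even _ _ b) by lia.
      destruct (Nat.eqb_spec i 1); lia.
    + rewrite (circ_stage_even _ _ b), (circ_stage_odd _ _ (S b)) by lia.
      destruct (Nat.eqb_spec i 1); simpl; nia.
  - intros s u v Hc. destruct (circ_crossing_rows s u v Hc) as [Hu [Hv [Hgu [Hgv Hrows]]]].
    repeat (split; [assumption|]). lia.
  - exact circ_edge_scheduled.
Qed.

End CircSchedule.

Section GridFromPattern.
Context {V : Type} (E : V -> V -> Prop).
Variable k : nat.
Variable Rs : nat -> nat -> V.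
Hypothesis Hray : forall m, m < k -> is_ray E (Rs m).
Hypothesis Hdisj : forall m m', m < k -> m' < k -> m <> m' -> rays_disjoint (Rs m) (Rs m').
Variable n : nat.
Variable q : nat -> nat.
Hypothesis Hq : distinct_below n k q.

Lemma chosen_lt c : chosen n q c -> c < k.
Proof. intros [i [Hi ->]]. exact (proj1 Hq i Hi). Qed.

Lemma hex_grid_of_pattern : hex_pattern (link_graph E k Rs) n q ->
  exists phi P, is_subdivision E (grid_vert n) (hex_edge n) phi P /\ rays_correspond n k Rs phi P.
Proof.
  intros Hhex.
  destruct (grid_subdivision_of_schedule E k Rs Hray Hdisj n q Hq (hex_crossing n) (hex_stage n)
              (hex_edge n) (hex_schedule n)) as [Hsub Hcorr]; [|eauto].
  intros s u v Hc. destruct (hex_crossing_rows n s u v Hc) as [_ [_ [_ [_ [_ [Hi Hrows]]]]]].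
  destruct (Hhex (s mod n + 1) Hi) as [Hdown Hup].
  apply (linked_of_reach E k Rs Hray Hdisj _ _ _ chosen_lt).
  destruct Hrows as [[-> ->]|[-> ->]]; replace (s mod n + 2) with (S (s mod n + 1)) by lia;
    assumption.
Qed.

Lemma circ_grid_of_pattern : 2 <= n -> circ_pattern (link_graph E k Rs) n q ->
  exists phi P, is_subdivision E (grid_vert n) (circ_edge n) phi P /\ rays_correspond n k Rs phi P.
Proof.
  intros Hn [Hstep Hwrap].
  destruct (grid_subdivision_of_schedule E k Rs Hray Hdisj n q Hq (circ_crossing n) (circ_stage n)
              (circ_edge n) (circ_schedule n Hn)) as [Hsub Hcorr]; [|eauto].
  intros s u v Hc. destruct (circ_crossing_rows n Hn s u v Hc) as [_ [_ [_ [_ Hrows]]]].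
  apply (linked_of_reach E k Rs Hray Hdisj _ _ _ chosen_lt).
  destruct Hrows as [[-> Hu]|[-> ->]]; [apply Hstep, Hu|exact Hwrap].
Qed.

End GridFromPattern.

Theorem theorem5p1 :
  forall n : nat, exists k : nat,
    forall (V : Type) (E : V -> V -> Prop) (w : (nat -> V) -> Prop)
           (Rs : nat -> nat -> V),
      is_end E w ->
      end_indeg_ge E w k ->
      (forall m, m < k -> is_ray E (Rs m) /\ w (Rs m)) ->
      (forall m m', m < k -> m' < k -> m <> m' -> rays_disjoint (Rs m) (Rs m')) ->
      (exists phi P, is_subdivision E (grid_vert n) (hex_edge n) phi P /\
                     rays_correspond n k Rs phi P) \/
      (exists phi P, is_subdivision E (grid_vert n) (circ_edge n) phi P /\
                     rays_correspond n k Rs phi P).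
Proof.
  intros n. exists (grid_ray_count n). intros V E w Rs [r0 [Hr0 Hw]] _ HRs Hdisj.
  set (k := grid_ray_count n).
  assert (Hray : forall m, m < k -> is_ray E (Rs m)) by (intros m Hm; apply HRs, Hm).
  destruct (Nat.le_gt_cases n 1) as [Hn|Hn].
  (* For [n <= 1] the grid has no rungs, so the hexagonal pattern holds vacuously. *)
  - left. apply (hex_grid_of_pattern E k Rs Hray Hdisj n (fun _ => 0)); [|intros i Hi; lia].
    split; intros; [unfold k, grid_ray_count|]; lia.
  - assert (Hend : forall a, a < k -> ray_le E (Rs a) r0 /\ ray_le E r0 (Rs a)).
    { intros a Ha. exact (proj2 (proj1 (Hw (Rs a)) (proj2 (HRs a Ha)))). }
    destruct (hex_or_circ_pattern (link_graph E k Rs) k n) as [q [Hq [Hhex|Hcirc]]].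
    + split; [intros a b [Ha [Hb _]]; split; assumption|].
      exact (link_graph_strongly_connected E k Rs Hdisj r0 Hr0 Hend).
    + lia.
    + reflexivity.
    + left. exact (hex_grid_of_pattern E k Rs Hray Hdisj n q Hq Hhex).
    + right. exact (circ_grid_of_pattern E k Rs Hray Hdisj n q Hq ltac:(lia) Hcirc).
Qed.
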